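(* In the setting described in the context, when $d\zeta_0''$ is expanded in the basis of 2-forms built from the coframe $\{\rho_0,\kappa_0',\zeta_0'',\bar\kappa_0',\bar\zeta_0''\}$, its coefficient of $\rho_0\wedge\bar\zeta_0''$ vanishes identically on $M$. (Explicitly, this coefficient equals $-i\,\frac{\overline{\mathcal L}_1(\bar k)}{\mathcal L_1(\bar k)}H_0-i\,\frac{\overline{\mathcal K}(H_0)}{\mathcal L_1(\bar k)}-i\,H_0\,\frac{\overline{\mathcal L}_1(\bar k)}{\mathcal L_1(\bar k)}$, and this is $\equiv0$.)
   Context: Let $M\subset\mathbb C^3$ be a real-analytic real hypersurface, considered locally near a point, represented in holomorphic coordinates $(z_1,z_2,w)$, $w=u+iv$, as a graph $u=F(z_1,z_2,\bar z_1,\bar z_2,v)$; $(z_1,z_2,\bar z_1,\bar z_2,v)$ are coordinates on $M$. Bars denote complex conjugation. Put $A^j:=-iF_{z_j}/(1+iF_v)$, $\mathcal L_j:=\partial_{z_j}+A^j\partial_v$ ($j=1,2$). Let $\ell:=i(\mathcal L_1(\overline{A^1})-\overline{\mathcal L}_1(A^1))$, assumed nowhere zero. Assume the Levi form has constant rank 1, let $k:=-(\mathcal L_2(\overline{A^1})-\overline{\mathcal L}_1(A^2))/(\mathcal L_1(\overline{A^1})-\overline{\mathcal L}_1(A^1))$, $\mathcal K:=k\mathcal L_1+\mathcal L_2$, $\overline{\mathcal K}=\bar k\overline{\mathcal L}_1+\overline{\mathcal L}_2$, and assume $\overline{\mathcal L}_1(k)$ vanishes nowhere (2-nondegeneracy).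 Let $P:=(\ell_{z_1}+A^1\ell_v-\ell A^1_v)/\ell$, $B_0:=\overline{\mathcal L}_1(\overline{\mathcal L}_1(k))/\overline{\mathcal L}_1(k)-\overline P$, and $H_0:=-\tfrac16\tfrac{\overline{\mathcal L}_1(\overline{\mathcal L}_1(\overline{\mathcal L}_1(k)))}{\overline{\mathcal L}_1(k)}+\tfrac29\tfrac{\overline{\mathcal L}_1(\overline{\mathcal L}_1(k))^2}{\overline{\mathcal L}_1(k)^2}+\tfrac1{18}\tfrac{\overline{\mathcal L}_1(\overline{\mathcal L}_1(k))\overline P}{\overline{\mathcal L}_1(k)}+\tfrac16\overline{\mathcal L}_1(\overline P)-\tfrac19\overline P^{\,2}$. Define the 1-forms on $M$: $\rho_0:=\ell^{-1}(dv-A^1dz_1-A^2dz_2-\overline{A^1}d\bar z_1-\overline{A^2}d\bar z_2)$, $\kappa_0':=dz_1-k\,dz_2+\tfrac i3B_0\rho_0$, $\zeta_0'':=\overline{\mathcal L}_1(k)\,dz_2+iH_0\,\rho_0$, and their conjugates; $\{\rho_0,\kappa_0',\zeta_0'',\bar\kappa_0',\bar\zeta_0''\}$ is a coframe of $\mathbb C\otimes TM$. *)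

From Stdlib Require Import Reals List.
From Coquelicot Require Import Coquelicot.
Open Scope R_scope.

(* Points of M, in the real coordinates (x1,y1,x2,y2,v), z_j = x_j + i y_j. *)
Record pt := mkpt { px1 : R; py1 : R; px2 : R; py2 : R; pv : R }.

Definition getc (p : pt) (i : nat) : R :=
  match i with
  | 0%nat => px1 p | 1%nat => py1 p | 2%nat => px2 p | 3%nat => py2 p | _ => pv p
  end.

Definition setc (p : pt) (i : nat) (t : R) : pt :=
  match i with
  | 0%nat => mkpt t (py1 p) (px2 p) (py2 p) (pv p)
  | 1%nat => mkpt (px1 p) t (px2 p) (py2 p) (pv p)
  | 2%nat => mkpt (px1 p) (py1 p) t (py2 p) (pv p)
  | 3%nat => mkpt (px1 p) (py1 p) (px2 p) t (pv p)
  | _ => mkpt (px1 p) (py1 p) (px2 p) (py2 p) t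
  end.

Definition rpartial (i : nat) (f : pt -> R) (p : pt) : R :=
  Derive (fun t => f (setc p i t)) (getc p i).

Definition near_pt (p q : pt) (d : R) : Prop :=
  forall i, (i < 5)%nat -> Rabs (getc q i - getc p i) < d.

Definition open_pt (U : pt -> Prop) : Prop :=
  forall p, U p -> exists d, 0 < d /\ forall q, near_pt p q d -> U q.

Definition cont_at (f : pt -> R) (p : pt) : Prop :=
  forall eps, 0 < eps -> exists d, 0 < d /\
    forall q, near_pt p q d -> Rabs (f q - f p) < eps.

Fixpoint iter_partial (l : list nat) (f : pt -> R) : pt -> R :=
  match l with
  | nil => f
  | i :: l' => rpartial i (iter_partial l' f)
  end.

Definition smooth_on (U : pt -> Prop) (f : pt -> R) : Prop :=
  forall (l : list nat) p, U p ->
    cont_at (iter_partial l f) p /\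
    forall i, (i < 5)%nat ->
      ex_derive (fun t => iter_partial l f (setc p i t)) (getc p i).

Definition sq_partial (t : nat -> nat -> nat -> nat -> nat -> R) (N : nat) : R :=
  sum_f_R0 (fun n1 => sum_f_R0 (fun n2 => sum_f_R0 (fun n3 =>
    sum_f_R0 (fun n4 => sum_f_R0 (fun n5 => t n1 n2 n3 n4 n5) N) N) N) N) N.

Definition analytic_on (U : pt -> Prop) (f : pt -> R) : Prop :=
  forall p, U p -> exists (a : nat -> nat -> nat -> nat -> nat -> R) (r : R),
    0 < r /\ forall q, near_pt p q r ->
      let term := fun n1 n2 n3 n4 n5 =>
        a n1 n2 n3 n4 n5 * (px1 q - px1 p) ^ n1 * (py1 q - py1 p) ^ n2
          * (px2 q - px2 p) ^ n3 * (py2 q - py2 p) ^ n4 * (pv q - pv p) ^ n5 in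
      (exists B, forall N, sq_partial (fun n1 n2 n3 n4 n5 => Rabs (term n1 n2 n3 n4 n5)) N <= B)
      /\ is_lim_seq (sq_partial term) (f q).

Open Scope C_scope.

Definition cfun := pt -> C.

Definition cpartial (i : nat) (f : cfun) (p : pt) : C :=
  (rpartial i (fun q => fst (f q)) p, rpartial i (fun q => snd (f q)) p).

Definition Dz (j : nat) (f : cfun) : cfun := fun p =>
  match j with
  | 1%nat => (cpartial 0 f p - Ci * cpartial 1 f p) / 2
  | _ => (cpartial 2 f p - Ci * cpartial 3 f p) / 2
  end.
Definition Dzb (j : nat) (f : cfun) : cfun := fun p =>
  match j with
  | 1%nat => (cpartial 0 f p + Ci * cpartial 1 f p) / 2
  | _ => (cpartial 2 f p + Ci * cpartial 3 f p) / 2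
  end.
Definition Dv (f : cfun) : cfun := fun p => cpartial 4 f p.

Definition cconj (f : cfun) : cfun := fun p => Cconj (f p).

Section Setting.
Variable F : pt -> R.   (* M : u = F(z1,z2,zbar1,zbar2,v) *)

Definition Fc : cfun := fun p => RtoC (F p).

Definition Acoef (j : nat) : cfun := fun p =>
  - Ci * Dz j Fc p / (1 + Ci * Dv Fc p).
Definition Abcoef (j : nat) : cfun := cconj (Acoef j).

Definition Lop (j : nat) (g : cfun) : cfun := fun p => Dz j g p + Acoef j p * Dv g p.
Definition Lbop (j : nat) (g : cfun) : cfun := fun p => Dzb j g p + Abcoef j p * Dv g p.

Definition ell : cfun := fun p => Ci * (Lop 1 (Abcoef 1) p - Lbop 1 (Acoef 1) p).

(* Levi matrix: [L_i, Lbar_j] = (L_i(Abar^j) - Lbar_j(A^i)) d_v *)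
Definition levi (i j : nat) : cfun := fun p => Lop i (Abcoef j) p - Lbop j (Acoef i) p.

Definition levi_rank_one (p : pt) : Prop :=
  levi 1 1 p * levi 2 2 p - levi 1 2 p * levi 2 1 p = 0 /\
  (levi 1 1 p <> 0 \/ levi 1 2 p <> 0 \/ levi 2 1 p <> 0 \/ levi 2 2 p <> 0).

Definition kk : cfun := fun p =>
  - (Lop 2 (Abcoef 1) p - Lbop 1 (Acoef 2) p) / (Lop 1 (Abcoef 1) p - Lbop 1 (Acoef 1) p).
Definition kkb : cfun := cconj kk.

Definition Kop (g : cfun) : cfun := fun p => kk p * Lop 1 g p + Lop 2 g p.
Definition Kbop (g : cfun) : cfun := fun p => kkb p * Lbop 1 g p + Lbop 2 g p.

Definition Lb1k : cfun := Lbop 1 kk.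

Definition Pf : cfun := fun p =>
  (Dz 1 ell p + Acoef 1 p * Dv ell p - ell p * Dv (Acoef 1) p) / ell p.
Definition Pbf : cfun := cconj Pf.

Definition B0 : cfun := fun p => Lbop 1 Lb1k p / Lb1k p - Pbf p.

Definition H0 : cfun := fun p =>
  - (1/6) * (Lbop 1 (Lbop 1 Lb1k) p / Lb1k p)
  + (2/9) * (Lbop 1 Lb1k p ^ 2 / Lb1k p ^ 2)
  + (1/18) * (Lbop 1 Lb1k p * Pbf p / Lb1k p)
  + (1/6) * Lbop 1 Pbf p
  - (1/9) * Pbf p ^ 2.

(* 1-forms on C (x) TM: coefficient functions in the basis
   (dz1, dz2, dzbar1, dzbar2, dv), indices 0..4 *)
Definition form1 := nat -> cfun.

Definition Dcoord (i : nat) (g : cfun) : cfun :=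
  match i with
  | 0%nat => Dz 1 g | 1%nat => Dz 2 g | 2%nat => Dzb 1 g | 3%nat => Dzb 2 g | _ => Dv g
  end.

(* complex conjugate of a 1-form: conj(dz_j) = dzbar_j, conj(dv) = dv *)
Definition conj_form (w : form1) : form1 := fun i =>
  match i with
  | 0%nat => cconj (w 2%nat) | 1%nat => cconj (w 3%nat)
  | 2%nat => cconj (w 0%nat) | 3%nat => cconj (w 1%nat) | _ => cconj (w 4%nat)
  end.

Definition rho0 : form1 := fun i p =>
  match i with
  | 0%nat => - Acoef 1 p / ell p | 1%nat => - Acoef 2 p / ell p
  | 2%nat => - Abcoef 1 p / ell p | 3%nat => - Abcoef 2 p / ell p
  | _ => 1 / ell p
  end.

Definition kappa0' : form1 := fun i p =>
  match i with
  | 0%nat => 1 | 1%nat => - kk p | _ => 0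
  end + (Ci / 3) * B0 p * rho0 i p.

Definition zeta0'' : form1 := fun i p =>
  match i with
  | 1%nat => Lb1k p | _ => 0
  end + Ci * H0 p * rho0 i p.

Definition coframe (a : nat) : form1 :=
  match a with
  | 0%nat => rho0 | 1%nat => kappa0' | 2%nat => zeta0''
  | 3%nat => conj_form kappa0' | _ => conj_form zeta0''
  end.

End Setting.

(* 2-forms are represented by their values on pairs of coordinate vectors
   (d/dz1, d/dz2, d/dzbar1, d/dzbar2, d/dv). *)
Definition form2 := nat -> nat -> cfun.

Definition dform (w : form1) : form2 := fun i j p =>
  Dcoord i (w j) p - Dcoord j (w i) p.

Definition wedge (a b : form1) : form2 := fun i j p =>
  a i p * b j p - a j p * b i p.

Definition pairs5 : list (nat * nat) :=
  ((0,1) :: (0,2) :: (0,3) :: (0,4) :: (1,2) :: (1,3) :: (1,4) :: (2,3) :: (2,4) :: (3,4) :: nil)%nat.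

Definition expand2 (th : nat -> form1) (c : nat -> nat -> cfun) : form2 := fun i j p =>
  fold_right (fun ab acc => c (fst ab) (snd ab) p * wedge (th (fst ab)) (th (snd ab)) i j p + acc)
    0 pairs5.

(* Let E0 and E4 be the vectors of the frame dual to (rho0, kappa0', zeta0'', conj kappa0',
   conj zeta0'') that pair to 1 with rho0 and with conj zeta0''; explicitly E4 = Kbar / L1(kbar).
   Since zeta0''(E0) and zeta0''(E4) are constant, the coefficient sought is
   dzeta0''(E0, E4) = - zeta0''([E0, E4]) = - zeta0''([E0, Kbar]) / L1(kbar), and a computation with
   the brackets of the frame (T, L1, K, Lbar1, Kbar) gives
   zeta0''([E0, Kbar]) = i (Kbar(H0) + 2 Lbar1(kbar) H0).
   So everything reduces to the transformation law Kbar(H0) = -2 Lbar1(kbar) H0.  Because the Levi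
   form has rank one with kernel spanned by K = k L1 + L2, the brackets [K, Lbar1], [L1, Kbar] and
   [K, Kbar] have no T-component; the Jacobi identity then gives Kbar(k) = 0, and from it
   Kbar(Lbar1(k)) = - Lbar1(kbar) Lbar1(k) together with the Kbar-derivatives of ell and Pbar.  H0 is
   assembled from Lbar1(k), its Lbar1-derivatives, Pbar and Lbar1(Pbar) with exactly the weights that
   make it transform with the factor -2. *)

From Pilot Require Import Defs.
From Stdlib Require Import Reals List.
From Coquelicot Require Import Coquelicot.
From Stdlib Require Import Lia Lra FunctionalExtensionality.
Open Scope R_scope.

(** * Smooth functions on an open set *)

Lemma setc_getc p i : setc p i (getc p i) = p.
Proof. destruct p, i as [|[|[|[|i]]]]; reflexivity. Qed.

Lemma getc_setc_same p i t : (i < 5)%nat -> getc (setc p i t) i = t.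
Proof. intros Hi. destruct i as [|[|[|[|[|i]]]]]; reflexivity || lia. Qed.

Lemma getc_setc_other p i j t : (i < 5)%nat -> (j < 5)%nat -> i <> j ->
  getc (setc p i t) j = getc p j.
Proof.
  intros Hi Hj Hij.
  destruct i as [|[|[|[|[|i]]]]], j as [|[|[|[|[|j]]]]]; reflexivity || lia.
Qed.

Lemma setc_setc_same p i s t : setc (setc p i s) i t = setc p i t.
Proof. destruct i as [|[|[|[|i]]]]; reflexivity. Qed.

Lemma setc_setc_comm p i j s t : (i < 5)%nat -> (j < 5)%nat -> i <> j ->
  setc (setc p i s) j t = setc (setc p j t) i s.
Proof.
  intros Hi Hj Hij.
  destruct i as [|[|[|[|[|i]]]]], j as [|[|[|[|[|j]]]]]; reflexivity || lia.
Qed.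

Lemma near_pt_mono p q d1 d2 : d1 <= d2 -> near_pt p q d1 -> near_pt p q d2.
Proof. intros Hd H i Hi. specialize (H i Hi). lra. Qed.

Lemma near_pt_setc2 p i j u v d : (i < 5)%nat -> (j < 5)%nat -> i <> j ->
  Rabs (u - getc p i) < d -> Rabs (v - getc p j) < d ->
  near_pt p (setc (setc p i u) j v) d.
Proof.
  intros Hi Hj Hij Hu Hv k Hk.
  destruct (Nat.eq_dec j k) as [<-|Hjk]; [now rewrite getc_setc_same|].
  rewrite getc_setc_other by auto.
  destruct (Nat.eq_dec i k) as [<-|Hik]; [now rewrite getc_setc_same|].
  rewrite getc_setc_other, Rminus_diag, Rabs_R0 by auto.
  eapply Rle_lt_trans; [apply Rabs_pos | exact Hu].
Qed.

Lemma near_pt_setc p i t d : (i < 5)%nat -> Rabs (t - getc p i) < d ->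
  near_pt p (setc p i t) d.
Proof.
  intros Hi Ht k Hk.
  destruct (Nat.eq_dec i k) as [<-|Hik]; [now rewrite getc_setc_same|].
  rewrite getc_setc_other, Rminus_diag, Rabs_R0 by auto.
  eapply Rle_lt_trans; [apply Rabs_pos | exact Ht].
Qed.

Lemma cont_at_comp2 (h : R -> R -> R) f g p : cont_at f p -> cont_at g p ->
  continuity_2d_pt h (f p) (g p) -> cont_at (fun q => h (f q) (g q)) p.
Proof.
  intros Hf Hg Hh eps Heps. destruct (Hh (mkposreal eps Heps)) as [d Hd].
  destruct (Hf d (cond_pos d)) as [d1 [Hd1 H1]].
  destruct (Hg d (cond_pos d)) as [d2 [Hd2 H2]].
  exists (Rmin d1 d2). split; [now apply Rmin_pos|].
  intros q Hq. apply Hd.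
  - apply H1. eapply near_pt_mono; [apply Rmin_l | exact Hq].
  - apply H2. eapply near_pt_mono; [apply Rmin_r | exact Hq].
Qed.

Lemma cont_at_const c p : cont_at (fun _ => c) p.
Proof. intros eps Heps. exists 1. split; [lra|]. intros. now rewrite Rminus_diag, Rabs_R0. Qed.

Lemma cont_at_plus f g p : cont_at f p -> cont_at g p -> cont_at (fun q => f q + g q) p.
Proof.
  intros. apply (cont_at_comp2 Rplus); auto.
  apply continuity_2d_pt_plus; [apply continuity_2d_pt_id1 | apply continuity_2d_pt_id2].
Qed.

Lemma cont_at_mult f g p : cont_at f p -> cont_at g p -> cont_at (fun q => f q * g q) p.
Proof.
  intros. apply (cont_at_comp2 Rmult); auto.
  apply continuity_2d_pt_mult; [apply continuity_2d_pt_id1 | apply continuity_2d_pt_id2].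
Qed.

Lemma cont_at_inv f p : cont_at f p -> f p <> 0 -> cont_at (fun q => / f q) p.
Proof.
  intros Hf Hn. apply (cont_at_comp2 (fun u _ => / u) f f); auto.
  apply continuity_2d_pt_inv; [apply continuity_2d_pt_id1 | exact Hn].
Qed.

Section SmoothFunctions.
Variable U : pt -> Prop.
Hypothesis U_open : open_pt U.

Lemma locally_setc p i : U p -> (i < 5)%nat -> locally (getc p i) (fun t => U (setc p i t)).
Proof.
  intros Hp Hi. destruct (U_open p Hp) as [d [Hd Hnear]].
  exists (mkposreal d Hd). intros t Ht. apply Hnear, near_pt_setc; auto.
Qed.

Lemma cont_at_ext_open (f g : pt -> R) p : U p -> (forall q, U q -> f q = g q) ->
  cont_at f p -> cont_at g p.
Proof.
  intros Hp Hfg Hf eps Heps. destruct (Hf eps Heps) as [d1 [Hd1 H1]].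
  destruct (U_open p Hp) as [d0 [Hd0 H0]].
  exists (Rmin d0 d1). split; [now apply Rmin_pos|].
  intros q Hq. rewrite <- !Hfg; auto.
  - apply H1. eapply near_pt_mono; [apply Rmin_r | exact Hq].
  - apply H0. eapply near_pt_mono; [apply Rmin_l | exact Hq].
Qed.

Lemma rpartial_ext_open i f g p : (i < 5)%nat -> U p -> (forall q, U q -> f q = g q) ->
  rpartial i f p = rpartial i g p.
Proof.
  intros Hi Hp Hfg. apply Derive_ext_loc.
  destruct (locally_setc p i Hp Hi) as [e He]. exists e. auto.
Qed.

Lemma ex_derive_ext_open i (f g : pt -> R) p : (i < 5)%nat -> U p ->
  (forall q, U q -> f q = g q) ->
  ex_derive (fun t => f (setc p i t)) (getc p i) -> ex_derive (fun t => g (setc p i t)) (getc p i).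
Proof.
  intros Hi Hp Hfg. apply ex_derive_ext_loc.
  destruct (locally_setc p i Hp Hi) as [e He]. exists e. auto.
Qed.

Lemma rpartial_opp i f p : rpartial i (fun q => - f q) p = - rpartial i f p.
Proof. apply (Derive_opp (fun t => f (setc p i t))). Qed.

Lemma rpartial_const i c p : rpartial i (fun _ => c) p = 0.
Proof. apply (Derive_const c). Qed.

Fixpoint Ck (n : nat) (f : pt -> R) : Prop :=
  (forall p, U p -> cont_at f p) /\
  match n with
  | O => True
  | S n' => (forall i p, (i < 5)%nat -> U p -> ex_derive (fun t => f (setc p i t)) (getc p i))
            /\ (forall i, (i < 5)%nat -> Ck n' (rpartial i f))
  end.

Lemma CkS_Ck n f : Ck (S n) f -> Ck n f.
Proof.
  revert f. induction n as [|n IH]; intros f [Hc [Hd Hp]]; repeat split; auto.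
Qed.

Lemma Ck_ext n f g : (forall q, U q -> f q = g q) -> Ck n f -> Ck n g.
Proof.
  revert f g. induction n as [|n IH]; intros f g Hfg [Hc Hr].
  - split; auto. intros p Hp. eapply cont_at_ext_open; eauto.
  - destruct Hr as [Hd Hp]. split; [|split].
    + intros p Hp'. eapply cont_at_ext_open; eauto.
    + intros i p Hi Hp'. eapply ex_derive_ext_open; eauto.
    + intros i Hi. apply (IH (rpartial i f)); auto.
      intros q Hq. apply rpartial_ext_open; auto.
Qed.

Lemma Ck_const n c : Ck n (fun _ => c).
Proof.
  revert c. induction n as [|n IH]; intros c; split; auto using cont_at_const.
  split.
  - intros. apply ex_derive_const.
  - intros i Hi. apply (Ck_ext _ (fun _ => 0)); [|apply IH].
    intros q _. symmetry. apply rpartial_const.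
Qed.

Lemma Ck_plus n f g : Ck n f -> Ck n g -> Ck n (fun q => f q + g q).
Proof.
  revert f g. induction n as [|n IH]; intros f g [Hcf Hf] [Hcg Hg].
  - split; auto using cont_at_plus.
  - destruct Hf as [Hdf Hpf], Hg as [Hdg Hpg]. split; [|split]; auto using cont_at_plus.
    + intros i p Hi Hp. apply (ex_derive_plus (fun t => f (setc p i t)) (fun t => g (setc p i t))); auto.
    + intros i Hi. eapply Ck_ext; [|apply (IH (rpartial i f) (rpartial i g)); auto].
      intros q Hq. symmetry.
      apply (Derive_plus (fun t => f (setc q i t)) (fun t => g (setc q i t))); auto.
Qed.

Lemma Ck_mult n f g : Ck n f -> Ck n g -> Ck n (fun q => f q * g q).
Proof.
  revert f g. induction n as [|n IH]; intros f g Hf Hg.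
  - destruct Hf as [Hcf _], Hg as [Hcg _]. split; auto using cont_at_mult.
  - pose proof (CkS_Ck _ _ Hf) as Hfn. pose proof (CkS_Ck _ _ Hg) as Hgn.
    destruct Hf as [Hcf [Hdf Hpf]], Hg as [Hcg [Hdg Hpg]].
    split; [|split]; auto using cont_at_mult.
    + intros i p Hi Hp. apply (ex_derive_mult (fun t => f (setc p i t)) (fun t => g (setc p i t))); auto.
    + intros i Hi.
      apply (Ck_ext _ (fun q => rpartial i f q * g q + f q * rpartial i g q)); [|apply Ck_plus; auto].
      intros q Hq. unfold rpartial at 3.
      rewrite (Derive_mult (fun t => f (setc q i t)) (fun t => g (setc q i t))), !setc_getc; auto.
Qed.

Lemma Ck_inv n f : Ck n f -> (forall q, U q -> f q <> 0) -> Ck n (fun q => / f q).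
Proof.
  revert f. induction n as [|n IH]; intros f Hf Hnz.
  - destruct Hf as [Hcf _]. split; auto using cont_at_inv.
  - pose proof (CkS_Ck _ _ Hf) as Hfn. pose proof (IH f Hfn Hnz) as Hinv.
    destruct Hf as [Hcf [Hdf Hpf]]. split; [|split]; auto using cont_at_inv.
    + intros i p Hi Hp. apply (ex_derive_inv (fun t => f (setc p i t))); auto.
      rewrite setc_getc. auto.
    + intros i Hi.
      apply (Ck_ext _ (fun q => (- 1 * rpartial i f q) * (/ f q * / f q)));
        [|apply Ck_mult; apply Ck_mult; auto using Ck_const].
      intros q Hq. unfold rpartial at 2.
      rewrite (Derive_inv (fun t => f (setc q i t))), setc_getc; auto.
      * unfold rpartial. field. auto.
      * rewrite setc_getc. auto.
Qed.

Definition smooth (f : pt -> R) : Prop := forall n, Ck n f.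

Lemma smooth_ext f g : (forall q, U q -> f q = g q) -> smooth f -> smooth g.
Proof. intros H Hf n. eapply Ck_ext; eauto. Qed.
Lemma smooth_const c : smooth (fun _ => c).
Proof. intros n. apply Ck_const. Qed.
Lemma smooth_plus f g : smooth f -> smooth g -> smooth (fun q => f q + g q).
Proof. intros Hf Hg n. apply Ck_plus; auto. Qed.
Lemma smooth_mult f g : smooth f -> smooth g -> smooth (fun q => f q * g q).
Proof. intros Hf Hg n. apply Ck_mult; auto. Qed.
Lemma smooth_inv f : smooth f -> (forall q, U q -> f q <> 0) -> smooth (fun q => / f q).
Proof. intros Hf Hnz n. apply Ck_inv; auto. Qed.
Lemma smooth_opp f : smooth f -> smooth (fun q => - f q).
Proof.
  intros Hf. apply (smooth_ext (fun q => -1 * f q)); [intros; ring|].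
  apply smooth_mult; auto using smooth_const.
Qed.
Lemma smooth_minus f g : smooth f -> smooth g -> smooth (fun q => f q - g q).
Proof. intros Hf Hg. apply (smooth_plus f (fun q => - g q)); auto using smooth_opp. Qed.
Lemma smooth_rpartial i f : (i < 5)%nat -> smooth f -> smooth (rpartial i f).
Proof. intros Hi Hf n. destruct (Hf (S n)) as [_ [_ H]]. exact (H i Hi). Qed.
Lemma smooth_ex_derive i f p : (i < 5)%nat -> U p -> smooth f ->
  ex_derive (fun t => f (setc p i t)) (getc p i).
Proof. intros Hi Hp Hf. destruct (Hf 1%nat) as [_ [H _]]. auto. Qed.
Lemma smooth_cont_at f p : U p -> smooth f -> cont_at f p.
Proof. intros Hp Hf. destruct (Hf 0%nat) as [H _]. auto. Qed.

Lemma iter_partial_snoc l i f : iter_partial (l ++ i :: nil) f = iter_partial l (rpartial i f).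
Proof. induction l as [|a l IH]; simpl; congruence. Qed.

Lemma smooth_on_smooth f : smooth_on U f -> smooth f.
Proof.
  intros H n. revert f H. induction n as [|n IH]; intros f H.
  - split; auto. intros p Hp. apply (H nil p Hp).
  - split; [|split].
    + intros p Hp. apply (H nil p Hp).
    + intros i p Hi Hp. apply (H nil p Hp); auto.
    + intros i Hi. apply IH. intros l p Hp. rewrite <- iter_partial_snoc. auto.
Qed.

Lemma rpartial_coord i j q : (i < 5)%nat -> (j < 5)%nat ->
  rpartial j (fun q => getc q i) q = if Nat.eqb i j then 1 else 0.
Proof.
  intros Hi Hj. unfold rpartial. destruct (Nat.eqb_spec i j) as [<-|Hij].
  - rewrite (Derive_ext _ (fun t => t)); [apply Derive_id | intros; now rewrite getc_setc_same].
  - rewrite (Derive_ext _ (fun _ => getc q i));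
      [apply Derive_const | intros; now rewrite getc_setc_other].
Qed.

Lemma smooth_coord i : (i < 5)%nat -> smooth (fun q => getc q i).
Proof.
  intros Hi n. revert i Hi. induction n as [|n IH]; intros i Hi;
    (split; [intros p _ eps Heps; exists eps; split; auto|]); auto.
  split.
  - intros j p Hj _. destruct (Nat.eq_dec i j) as [<-|Hij].
    + apply (ex_derive_ext (fun t => t)); [intros; now rewrite getc_setc_same | apply ex_derive_id].
    + apply (ex_derive_ext (fun _ => getc p i));
        [intros; now rewrite getc_setc_other | apply ex_derive_const].
  - intros j Hj. apply (Ck_ext _ (fun _ => if Nat.eqb i j then 1 else 0)); [|apply Ck_const].
    intros q _. symmetry. apply rpartial_coord; auto.
Qed.

Lemma rpartial_plus i f g p : (i < 5)%nat -> U p -> smooth f -> smooth g ->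
  rpartial i (fun q => f q + g q) p = rpartial i f p + rpartial i g p.
Proof.
  intros. apply (Derive_plus (fun t => f (setc p i t)) (fun t => g (setc p i t)));
    apply smooth_ex_derive; auto.
Qed.

Lemma rpartial_mult i f g p : (i < 5)%nat -> U p -> smooth f -> smooth g ->
  rpartial i (fun q => f q * g q) p = rpartial i f p * g p + f p * rpartial i g p.
Proof.
  intros. unfold rpartial.
  rewrite (Derive_mult (fun t => f (setc p i t)) (fun t => g (setc p i t))), !setc_getc; auto;
    apply smooth_ex_derive; auto.
Qed.

Lemma rpartial_minus i f g p : (i < 5)%nat -> U p -> smooth f -> smooth g ->
  rpartial i (fun q => f q - g q) p = rpartial i f p - rpartial i g p.
Proof.
  intros. unfold Rminus. rewrite <- rpartial_opp.
  apply (rpartial_plus i f (fun q => - g q)); auto using smooth_opp.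
Qed.

Section Schwarz.
Variables (i j : nat) (p : pt).
Hypotheses (Hi : (i < 5)%nat) (Hj : (j < 5)%nat) (Hij : i <> j) (Hp : U p).

Let slice (u v : R) : pt := setc (setc p i u) j v.

Let slice_setc_i u v t : setc (slice u v) i t = slice t v.
Proof. unfold slice. rewrite setc_setc_comm, setc_setc_same, setc_setc_comm; auto. Qed.

Let slice_setc_j u v t : setc (slice u v) j t = slice u t.
Proof. apply setc_setc_same. Qed.

Let getc_slice_i u v : getc (slice u v) i = u.
Proof. unfold slice. rewrite getc_setc_other, getc_setc_same; auto. Qed.

Let getc_slice_j u v : getc (slice u v) j = v.
Proof. apply getc_setc_same; auto. Qed.

Let rpartial_slice_i f u v : rpartial i f (slice u v) = Derive (fun t => f (slice t v)) u.
Proof.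
  unfold rpartial. rewrite getc_slice_i. apply Derive_ext. intros t. now rewrite slice_setc_i.
Qed.

Let rpartial_slice_j f u v : rpartial j f (slice u v) = Derive (fun t => f (slice u t)) v.
Proof.
  unfold rpartial. rewrite getc_slice_j. apply Derive_ext. intros t. now rewrite slice_setc_j.
Qed.

Let ex_derive_slice_i f u v : U (slice u v) -> smooth f -> ex_derive (fun t => f (slice t v)) u.
Proof.
  intros Hq Hf. rewrite <- (getc_slice_i u v).
  eapply ex_derive_ext; [|apply (smooth_ex_derive i f _ Hi Hq Hf)].
  intros t. simpl. now rewrite slice_setc_i.
Qed.

Let ex_derive_slice_j f u v : U (slice u v) -> smooth f -> ex_derive (fun t => f (slice u t)) v.
Proof.
  intros Hq Hf. rewrite <- (getc_slice_j u v).
  eapply ex_derive_ext; [|apply (smooth_ex_derive j f _ Hj Hq Hf)].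
  intros t. simpl. now rewrite slice_setc_j.
Qed.

Let continuity_slice h : smooth h -> continuity_2d_pt (fun u v => h (slice u v)) (getc p i) (getc p j).
Proof.
  intros Hh eps.
  destruct (smooth_cont_at h p Hp Hh eps (cond_pos eps)) as [d [Hd Hnear]].
  exists (mkposreal d Hd). intros u v Hu Hv.
  replace (slice (getc p i) (getc p j)) with p by (unfold slice; now rewrite !setc_getc).
  apply Hnear, near_pt_setc2; auto.
Qed.

Lemma rpartial_comm f : smooth f -> rpartial i (rpartial j f) p = rpartial j (rpartial i f) p.
Proof.
  intros Hf.
  destruct (U_open p Hp) as [d [Hd Hnear]].
  assert (HU2 : forall u v, Rabs (u - getc p i) < d -> Rabs (v - getc p j) < d -> U (slice u v))
    by (intros; apply Hnear, near_pt_setc2; auto).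
  assert (Eij : forall u v, Derive (fun z => Derive (fun t => f (slice z t)) v) u
                            = rpartial i (rpartial j f) (slice u v)).
  { intros u v. rewrite rpartial_slice_i. apply Derive_ext. intros z. now rewrite rpartial_slice_j. }
  assert (Eji : forall u v, Derive (fun z => Derive (fun t => f (slice t z)) u) v
                            = rpartial j (rpartial i f) (slice u v)).
  { intros u v. rewrite rpartial_slice_j. apply Derive_ext. intros z. now rewrite rpartial_slice_i. }
  assert (Ep : slice (getc p i) (getc p j) = p) by (unfold slice; now rewrite !setc_getc).
  rewrite <- Ep, <- Eij, <- Eji.
  apply (Schwarz (fun u v => f (slice u v))).
  - exists (mkposreal d Hd). intros u v Hu Hv.
    pose proof (HU2 u v Hu Hv) as Hq.
    repeat split; auto.
    + apply (ex_derive_ext (fun z => rpartial j f (slice z v))); [intros; apply rpartial_slice_j|].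
      apply ex_derive_slice_i; auto using smooth_rpartial.
    + apply (ex_derive_ext (fun z => rpartial i f (slice u z))); [intros; apply rpartial_slice_i|].
      apply ex_derive_slice_j; auto using smooth_rpartial.
  - apply (continuity_2d_pt_ext (fun u v => rpartial i (rpartial j f) (slice u v)));
      [intros; symmetry; apply Eij|].
    apply continuity_slice; auto using smooth_rpartial.
  - apply (continuity_2d_pt_ext (fun u v => rpartial j (rpartial i f) (slice u v)));
      [intros; symmetry; apply Eji|].
    apply continuity_slice; auto using smooth_rpartial.
Qed.

End Schwarz.
End SmoothFunctions.

(** * Complex-valued functions and the coordinate derivatives *)

Section ComplexFunctions.
Variable U : pt -> Prop.
Hypothesis U_open : open_pt U.

Definition csmooth (f : cfun) : Prop :=
  smooth U (fun q => fst (f q)) /\ smooth U (fun q => snd (f q)).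

Lemma csmooth_ext f g : (forall q, U q -> f q = g q) -> csmooth f -> csmooth g.
Proof.
  intros H [Hre Him]. split.
  - apply (smooth_ext U U_open (fun q => fst (f q))); auto. intros q Hq. now rewrite H.
  - apply (smooth_ext U U_open (fun q => snd (f q))); auto. intros q Hq. now rewrite H.
Qed.

Lemma csmooth_const (c : C) : csmooth (fun _ => c).
Proof. split; now apply smooth_const. Qed.

Lemma csmooth_RtoC f : smooth U f -> csmooth (fun q => RtoC (f q)).
Proof. intros Hf. split; simpl; [exact Hf | now apply smooth_const]. Qed.

Lemma csmooth_plus f g : csmooth f -> csmooth g -> csmooth (fun q => (f q + g q)%C).
Proof. intros [] []. split; simpl; apply smooth_plus; auto. Qed.

Lemma csmooth_opp f : csmooth f -> csmooth (fun q => (- f q)%C).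
Proof. intros []. split; simpl; apply smooth_opp; auto. Qed.

Lemma csmooth_minus f g : csmooth f -> csmooth g -> csmooth (fun q => (f q - g q)%C).
Proof. intros. apply (csmooth_plus f (fun q => (- g q)%C)); auto using csmooth_opp. Qed.

Lemma csmooth_mult f g : csmooth f -> csmooth g -> csmooth (fun q => (f q * g q)%C).
Proof.
  intros [] []. split; simpl; [apply smooth_minus | apply smooth_plus]; auto;
    apply smooth_mult; auto.
Qed.

Lemma csmooth_conj f : csmooth f -> csmooth (cconj f).
Proof. intros []. split; simpl; [|apply smooth_opp]; auto. Qed.

Lemma csmooth_inv f : csmooth f -> (forall q, U q -> f q <> 0%C) -> csmooth (fun q => (/ f q)%C).
Proof.
  intros [Hre Him] Hnz.
  assert (Hnorm : smooth U (fun q => / (fst (f q) ^ 2 + snd (f q) ^ 2))).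
  { apply smooth_inv; auto.
    - apply (smooth_ext U U_open (fun q => fst (f q) * fst (f q) + snd (f q) * snd (f q)));
        [intros; ring|].
      apply smooth_plus; auto; apply smooth_mult; auto.
    - intros q Hq E. apply (Hnz q Hq). destruct (f q) as [a b]. simpl in E.
      assert (a = 0) by nra. assert (b = 0) by nra. subst. reflexivity. }
  split; simpl; apply smooth_mult; auto; apply smooth_opp; auto.
Qed.

Lemma csmooth_div f g : csmooth f -> csmooth g -> (forall q, U q -> g q <> 0%C) ->
  csmooth (fun q => (f q / g q)%C).
Proof. intros. apply (csmooth_mult f (fun q => (/ g q)%C)); auto using csmooth_inv. Qed.

Lemma csmooth_cpartial i f : (i < 5)%nat -> csmooth f -> csmooth (cpartial i f).
Proof. intros Hi []. split; simpl; apply (smooth_rpartial U); auto. Qed.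

Open Scope C_scope.

Lemma cpartial_ext_open i f g p : (i < 5)%nat -> U p -> (forall q, U q -> f q = g q) ->
  cpartial i f p = cpartial i g p.
Proof.
  intros Hi Hp H. unfold cpartial.
  f_equal; apply (rpartial_ext_open U); auto; intros q Hq; now rewrite H.
Qed.

Lemma cpartial_plus i f g p : (i < 5)%nat -> U p -> csmooth f -> csmooth g ->
  cpartial i (fun q => f q + g q) p = cpartial i f p + cpartial i g p.
Proof. intros Hi Hp [] []. unfold cpartial. simpl. now rewrite !(rpartial_plus U). Qed.

Lemma cpartial_mult i f g p : (i < 5)%nat -> U p -> csmooth f -> csmooth g ->
  cpartial i (fun q => f q * g q) p = cpartial i f p * g p + f p * cpartial i g p.
Proof.
  intros Hi Hp [] []. unfold cpartial. simpl.
  rewrite (rpartial_minus U), (rpartial_plus U), !(rpartial_mult U); auto using smooth_mult.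
  apply injective_projections; simpl; ring.
Qed.

Lemma cpartial_const i (c : C) p : cpartial i (fun _ => c) p = 0.
Proof. unfold cpartial. now rewrite !rpartial_const. Qed.

Lemma cpartial_scal i (c : C) f p : (i < 5)%nat -> U p -> csmooth f ->
  cpartial i (fun q => c * f q) p = c * cpartial i f p.
Proof.
  intros. rewrite (cpartial_mult i (fun _ => c)), cpartial_const; auto using csmooth_const. ring.
Qed.

Lemma cpartial_opp i f p : cpartial i (fun q => - f q) p = - cpartial i f p.
Proof. unfold cpartial. simpl. now rewrite !rpartial_opp. Qed.

Lemma cpartial_conj i f p : cpartial i (cconj f) p = Cconj (cpartial i f p).
Proof. unfold cpartial, cconj. simpl. now rewrite rpartial_opp. Qed.

Lemma cpartial_RtoC i f p : cpartial i (fun q => RtoC (f q)) p = RtoC (rpartial i f p).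
Proof. unfold cpartial. simpl. now rewrite rpartial_const. Qed.

Lemma cpartial_comm i j f p : (i < 5)%nat -> (j < 5)%nat -> U p -> csmooth f ->
  cpartial i (cpartial j f) p = cpartial j (cpartial i f) p.
Proof.
  intros Hi Hj Hp [Hre Him].
  destruct (Nat.eq_dec i j) as [<-|Hij]; [reflexivity|].
  unfold cpartial at 1 3. simpl. now rewrite !(rpartial_comm U U_open i j).
Qed.

(* Wirtinger: d/dz = (d/dx - i d/dy) / 2 and d/dzbar = (d/dx + i d/dy) / 2. *)
Definition xindex (i : nat) : nat :=
  match i with 0%nat | 2%nat => 0 | 1%nat | 3%nat => 2 | _ => 4 end.
Definition yindex (i : nat) : nat :=
  match i with 0%nat | 2%nat => 1 | 1%nat | 3%nat => 3 | _ => 4 end.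
Definition xweight (i : nat) : C :=
  match i with 0%nat | 1%nat | 2%nat | 3%nat => / 2 | _ => 1 end.
Definition yweight (i : nat) : C :=
  match i with 0%nat | 1%nat => - Ci / 2 | 2%nat | 3%nat => Ci / 2 | _ => 0 end.

Lemma xindex_lt i : (xindex i < 5)%nat.
Proof. destruct i as [|[|[|[|i]]]]; simpl; lia. Qed.
Lemma yindex_lt i : (yindex i < 5)%nat.
Proof. destruct i as [|[|[|[|i]]]]; simpl; lia. Qed.
Local Hint Resolve xindex_lt yindex_lt : core.

Lemma Dcoord_cpartial i g : (i < 5)%nat ->
  Dcoord i g = fun p => xweight i * cpartial (xindex i) g p + yweight i * cpartial (yindex i) g p.
Proof.
  intros Hi. apply functional_extensionality. intros p.
  destruct i as [|[|[|[|[|i]]]]]; try lia; simpl; unfold Dz, Dzb, Dv; field.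
Qed.

Lemma csmooth_Dcoord i g : (i < 5)%nat -> csmooth g -> csmooth (Dcoord i g).
Proof.
  intros Hi Hg. rewrite Dcoord_cpartial by exact Hi.
  apply csmooth_plus; apply (csmooth_mult (fun _ => _));
    auto using csmooth_const, csmooth_cpartial.
Qed.

Lemma Dcoord_plus i f g p : (i < 5)%nat -> U p -> csmooth f -> csmooth g ->
  Dcoord i (fun q => f q + g q) p = Dcoord i f p + Dcoord i g p.
Proof. intros. rewrite !Dcoord_cpartial, !cpartial_plus; auto. ring. Qed.

Lemma Dcoord_mult i f g p : (i < 5)%nat -> U p -> csmooth f -> csmooth g ->
  Dcoord i (fun q => f q * g q) p = Dcoord i f p * g p + f p * Dcoord i g p.
Proof. intros. rewrite !Dcoord_cpartial, !cpartial_mult; auto. ring. Qed.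

Lemma Dcoord_const i (c : C) p : (i < 5)%nat -> Dcoord i (fun _ => c) p = 0.
Proof. intros. rewrite Dcoord_cpartial, !cpartial_const; auto. ring. Qed.

Lemma Dcoord_ext_open i f g p : (i < 5)%nat -> U p -> (forall q, U q -> f q = g q) ->
  Dcoord i f p = Dcoord i g p.
Proof. intros. rewrite !Dcoord_cpartial, (cpartial_ext_open _ f g), (cpartial_ext_open _ f g); auto. Qed.

Lemma Dcoord_comm i j g p : (i < 5)%nat -> (j < 5)%nat -> U p -> csmooth g ->
  Dcoord i (Dcoord j g) p = Dcoord j (Dcoord i g) p.
Proof.
  intros Hi Hj Hp Hg.
  rewrite !(Dcoord_cpartial _ (Dcoord _ g)), !(Dcoord_cpartial _ g); auto.
  assert (Hscal : forall k (c : C), (k < 5)%nat -> csmooth (fun q => c * cpartial k g q)).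
  { intros. apply (csmooth_mult (fun _ => c)); auto using csmooth_const, csmooth_cpartial. }
  rewrite !cpartial_plus, !cpartial_scal; auto using csmooth_cpartial.
  rewrite (cpartial_comm (xindex i) (xindex j)), (cpartial_comm (xindex i) (yindex j)),
    (cpartial_comm (yindex i) (xindex j)), (cpartial_comm (yindex i) (yindex j)); auto.
  ring.
Qed.

Definition conj_index (i : nat) : nat :=
  match i with 0%nat => 2 | 1%nat => 3 | 2%nat => 0 | 3%nat => 1 | _ => 4 end.

Lemma Dcoord_conj i g p : (i < 5)%nat -> Cconj (Dcoord i g p) = Dcoord (conj_index i) (cconj g) p.
Proof.
  intros Hi. destruct i as [|[|[|[|[|i]]]]]; try lia; simpl; unfold Dz, Dzb, Dv;
    rewrite !cpartial_conj; apply injective_projections; simpl; field.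
Qed.

End ComplexFunctions.

Open Scope C_scope.

Lemma cconj_cconj g : cconj (cconj g) = g.
Proof. apply functional_extensionality. intros q. apply Cconj_conj. Qed.

Lemma Cconj_RtoC (r : R) : Cconj (RtoC r) = RtoC r.
Proof. apply injective_projections; simpl; ring. Qed.

Lemma Cconj_Ci : Cconj Ci = - Ci.
Proof. apply injective_projections; simpl; ring. Qed.

Lemma Cconj_inv (z : C) : Cconj (/ z) = / Cconj z.
Proof.
  destruct z as [a b]. unfold Cinv, Cconj. cbn [fst snd].
  replace ((a ^ 2 + (- b) ^ 2))%R with (a ^ 2 + b ^ 2)%R by ring.
  f_equal. unfold Rdiv. ring.
Qed.

Lemma Cconj_div (a b : C) : Cconj (a / b) = Cconj a / Cconj b.
Proof. unfold Cdiv. now rewrite Cmult_conj, Cconj_inv. Qed.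

Lemma Ceq_of_diff (a b z : C) : a - b = z -> z = 0 -> a = b.
Proof. intros H Hz. rewrite Hz in H. rewrite <- (Cplus_0_l b), <- H. ring. Qed.

Lemma Cmult_eq_0_l (a b : C) : a * b = 0 -> b <> 0 -> a = 0.
Proof. intros H Hb. rewrite <- (Cmult_1_r a), <- (Cinv_r b), Cmult_assoc, H by exact Hb. ring. Qed.

Lemma RtoC_3_nz : RtoC 3 <> 0.
Proof. intros E. apply (f_equal fst) in E. simpl in E. lra. Qed.

(** * Vector fields *)

Definition sum5 (f : nat -> C) : C := f 0%nat + f 1%nat + f 2%nat + f 3%nat + f 4%nat.

Lemma sum5_ext f g : (forall i, (i < 5)%nat -> f i = g i) -> sum5 f = sum5 g.
Proof. intros H. unfold sum5. rewrite !H by lia. reflexivity. Qed.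

(* Components in the frame (d/dz1, d/dz2, d/dzbar1, d/dzbar2, d/dv), dual to the coefficients
   of a [form1]. *)
Definition vfield := nat -> cfun.

Definition vderiv (X : vfield) (g : cfun) : cfun := fun p => sum5 (fun i => X i p * Dcoord i g p).

Definition vbracket (X Y : vfield) : vfield := fun i q => vderiv X (Y i) q - vderiv Y (X i) q.

Definition vcomm (X Y : vfield) (g : cfun) : cfun :=
  fun q => vderiv X (vderiv Y g) q - vderiv Y (vderiv X g) q.

Definition pairing (w : Defs.form1) (X : vfield) : cfun := fun p => sum5 (fun i => w i p * X i p).

Definition vscale (r : cfun) (Y : vfield) : vfield := fun i q => r q * Y i q.

Lemma vderiv_vscale r Y g q : vderiv (vscale r Y) g q = r q * vderiv Y g q.
Proof. unfold vderiv, vscale, sum5. ring. Qed.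

Lemma vderiv_const X (c : C) p : vderiv X (fun _ => c) p = 0.
Proof. unfold vderiv, sum5. rewrite !Dcoord_const by lia. ring. Qed.

Lemma vderiv_comb X V W (a b : C) g p :
  (forall i, (i < 5)%nat -> X i p = a * V i p + b * W i p) ->
  vderiv X g p = a * vderiv V g p + b * vderiv W g p.
Proof. intros H. unfold vderiv, sum5. rewrite !H by lia. ring. Qed.

Lemma vderiv_scal_field X V (a : C) g p : (forall i, (i < 5)%nat -> X i p = a * V i p) ->
  vderiv X g p = a * vderiv V g p.
Proof. intros H. unfold vderiv, sum5. rewrite !H by lia. ring. Qed.

Lemma vcomm_antisym X Y g q : vcomm X Y g q = - vcomm Y X g q.
Proof. unfold vcomm. ring. Qed.

Lemma vcomm_self X g q : vcomm X X g q = 0.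
Proof. unfold vcomm. ring. Qed.

Section VectorFields.
Variable U : pt -> Prop.
Hypothesis U_open : open_pt U.

Definition vsmooth (X : vfield) : Prop := forall i, (i < 5)%nat -> csmooth U (X i).

Lemma csmooth_vderiv X g : vsmooth X -> csmooth U g -> csmooth U (vderiv X g).
Proof.
  intros HX Hg. unfold vderiv, sum5.
  repeat apply csmooth_plus; auto; apply csmooth_mult; auto; try apply csmooth_Dcoord; auto;
    try apply HX; lia.
Qed.

Lemma vderiv_ext_open X f g p : U p -> (forall q, U q -> f q = g q) -> vderiv X f p = vderiv X g p.
Proof.
  intros. unfold vderiv, sum5. rewrite !(Dcoord_ext_open U U_open _ f g) by (auto; lia).
  reflexivity.
Qed.

Lemma vderiv_plus X f g p : U p -> csmooth U f -> csmooth U g ->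
  vderiv X (fun q => f q + g q) p = vderiv X f p + vderiv X g p.
Proof. intros. unfold vderiv, sum5. rewrite !(Dcoord_plus U) by (auto; lia). ring. Qed.

Lemma vderiv_mult X f g p : U p -> csmooth U f -> csmooth U g ->
  vderiv X (fun q => f q * g q) p = vderiv X f p * g p + f p * vderiv X g p.
Proof. intros. unfold vderiv, sum5. rewrite !(Dcoord_mult U) by (auto; lia). ring. Qed.

Lemma vderiv_scal X (c : C) f p : U p -> csmooth U f ->
  vderiv X (fun q => c * f q) p = c * vderiv X f p.
Proof.
  intros. rewrite (vderiv_mult X (fun _ => c)), vderiv_const; auto using csmooth_const. ring.
Qed.

Lemma vderiv_opp X f p : U p -> csmooth U f -> vderiv X (fun q => - f q) p = - vderiv X f p.
Proof.
  intros. rewrite (vderiv_ext_open X _ (fun q => (-1) * f q)) by (auto; intros; ring).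
  rewrite vderiv_scal by auto. ring.
Qed.

Lemma vderiv_minus X f g p : U p -> csmooth U f -> csmooth U g ->
  vderiv X (fun q => f q - g q) p = vderiv X f p - vderiv X g p.
Proof.
  intros. unfold Cminus. rewrite vderiv_plus, vderiv_opp; auto using csmooth_opp.
Qed.

Lemma vderiv_inv X f p : U p -> csmooth U f -> (forall q, U q -> f q <> 0) ->
  vderiv X (fun q => / f q) p = - vderiv X f p / (f p * f p).
Proof.
  intros Hp Hf Hnz.
  assert (E : vderiv X (fun q => f q * / f q) p = 0).
  { rewrite (vderiv_ext_open X _ (fun _ => 1)), vderiv_const; auto.
    intros q Hq. field. auto. }
  rewrite vderiv_mult in E; auto using csmooth_inv.
  pose proof (Hnz p Hp).
  replace (vderiv X (fun q => / f q) p)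
    with ((vderiv X f p * / f p + f p * vderiv X (fun q => / f q) p) / f p
          - vderiv X f p / (f p * f p)) by (field; auto).
  rewrite E. field. auto.
Qed.

Lemma vderiv_div X f g p : U p -> csmooth U f -> csmooth U g -> (forall q, U q -> g q <> 0) ->
  vderiv X (fun q => f q / g q) p = (vderiv X f p * g p - f p * vderiv X g p) / (g p * g p).
Proof.
  intros Hp Hf Hg Hnz. unfold Cdiv at 1.
  rewrite (vderiv_mult X f (fun q => / g q)), vderiv_inv; auto using csmooth_inv.
  field. auto.
Qed.

Lemma Dcoord_vderiv i Y g p : (i < 5)%nat -> U p -> vsmooth Y -> csmooth U g ->
  Dcoord i (vderiv Y g) p
  = sum5 (fun j => Dcoord i (Y j) p * Dcoord j g p + Y j p * Dcoord i (Dcoord j g) p).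
Proof.
  intros Hi Hp HY Hg. unfold vderiv, sum5.
  assert (Hterm : forall k, (k < 5)%nat -> csmooth U (fun q => Y k q * Dcoord k g q))
    by (intros; apply csmooth_mult; auto using csmooth_Dcoord).
  rewrite !(Dcoord_plus U); auto; try (repeat (apply csmooth_plus; auto); apply Hterm; lia).
  rewrite !(Dcoord_mult U); auto; try apply csmooth_Dcoord; auto; try apply HY; lia.
Qed.

Lemma vcomm_vbracket X Y g p : U p -> vsmooth X -> vsmooth Y -> csmooth U g ->
  vcomm X Y g p = vderiv (vbracket X Y) g p.
Proof.
  intros Hp HX HY Hg. unfold vcomm. unfold vderiv at 1 3. unfold sum5 at 1 2.
  rewrite !Dcoord_vderiv by (auto; lia).
  unfold vbracket, vderiv, sum5.
  rewrite (Dcoord_comm U U_open 1 0 g), (Dcoord_comm U U_open 2 0 g), (Dcoord_comm U U_open 3 0 g),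
    (Dcoord_comm U U_open 4 0 g), (Dcoord_comm U U_open 2 1 g), (Dcoord_comm U U_open 3 1 g),
    (Dcoord_comm U U_open 4 1 g), (Dcoord_comm U U_open 3 2 g), (Dcoord_comm U U_open 4 2 g),
    (Dcoord_comm U U_open 4 3 g) by (auto; lia).
  ring.
Qed.

Lemma vcomm_jacobi X Y Z g p : U p -> vsmooth X -> vsmooth Y -> vsmooth Z -> csmooth U g ->
  (vderiv X (vcomm Y Z g) p - vcomm Y Z (vderiv X g) p)
  + (vderiv Y (vcomm Z X g) p - vcomm Z X (vderiv Y g) p)
  + (vderiv Z (vcomm X Y g) p - vcomm X Y (vderiv Z g) p) = 0.
Proof.
  intros. unfold vcomm at 1 3 5.
  rewrite !vderiv_minus; auto using csmooth_vderiv. unfold vcomm. ring.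
Qed.

Lemma vcomm_vscale X r Y g p : U p -> vsmooth Y -> csmooth U r -> csmooth U g ->
  vcomm X (vscale r Y) g p = vderiv X r p * vderiv Y g p + r p * vcomm X Y g p.
Proof.
  intros Hp HY Hr Hg. unfold vcomm. rewrite vderiv_vscale.
  rewrite (vderiv_ext_open X _ (fun q => r q * vderiv Y g q)), vderiv_mult
    by (auto using csmooth_vderiv; intros; apply vderiv_vscale).
  ring.
Qed.

Lemma vderiv_vcomm_scaled X Y Z W c g p : U p -> vsmooth X -> vsmooth W -> csmooth U c ->
  csmooth U g ->
  (forall h q, U q -> csmooth U h -> vcomm Y Z h q = c q * vderiv W h q) ->
  vderiv X (vcomm Y Z g) p - vcomm Y Z (vderiv X g) p
  = vderiv X c p * vderiv W g p + c p * vcomm X W g p.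
Proof.
  intros Hp HX HW Hc Hg H.
  rewrite (vderiv_ext_open X _ (fun q => c q * vderiv W g q)), vderiv_mult, H
    by auto using csmooth_vderiv.
  unfold vcomm. ring.
Qed.

Lemma vderiv_vcomm_scaled2 X Y Z W1 W2 c1 c2 g p : U p -> vsmooth X -> vsmooth W1 -> vsmooth W2 ->
  csmooth U c1 -> csmooth U c2 -> csmooth U g ->
  (forall h q, U q -> csmooth U h -> vcomm Y Z h q = c1 q * vderiv W1 h q + c2 q * vderiv W2 h q) ->
  vderiv X (vcomm Y Z g) p - vcomm Y Z (vderiv X g) p
  = vderiv X c1 p * vderiv W1 g p + c1 p * vcomm X W1 g p
    + (vderiv X c2 p * vderiv W2 g p + c2 p * vcomm X W2 g p).
Proof.
  intros Hp HX HW1 HW2 Hc1 Hc2 Hg H.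
  rewrite (vderiv_ext_open X _ (fun q => c1 q * vderiv W1 g q + c2 q * vderiv W2 g q)), vderiv_plus,
    !vderiv_mult, H by auto using csmooth_vderiv, csmooth_mult.
  unfold vcomm. ring.
Qed.

Lemma dform_on_pair w X Y p : U p -> (forall i, (i < 5)%nat -> csmooth U (w i)) ->
  vsmooth X -> vsmooth Y ->
  sum5 (fun i => sum5 (fun j => X i p * Y j p * dform w i j p))
  = vderiv X (pairing w Y) p - vderiv Y (pairing w X) p - pairing w (vbracket X Y) p.
Proof.
  intros Hp Hw HX HY.
  assert (Hsum : forall V Z, vsmooth Z ->
            vderiv V (pairing w Z) p
            = sum5 (fun i => vderiv V (w i) p * Z i p + w i p * vderiv V (Z i) p)).
  { intros V Z HZ. unfold pairing, sum5.
    assert (Hterm : forall k, (k < 5)%nat -> csmooth U (fun q => w k q * Z k q))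
      by (intros; apply csmooth_mult; auto).
    rewrite !vderiv_plus; auto; try (repeat (apply csmooth_plus; auto); apply Hterm; lia).
    rewrite !vderiv_mult; auto; try apply Hw; try apply HZ; lia. }
  rewrite !Hsum by auto.
  unfold pairing, vbracket, vderiv, dform, sum5. ring.
Qed.

End VectorFields.

Lemma expand2_on_dual_pair (th : nat -> Defs.form1) c X Y p :
  (forall a, (a < 5)%nat -> pairing (th a) X p = if Nat.eqb a 0 then 1 else 0) ->
  (forall a, (a < 5)%nat -> pairing (th a) Y p = if Nat.eqb a 4 then 1 else 0) ->
  sum5 (fun i => sum5 (fun j => X i p * Y j p * expand2 th c i j p)) = c 0%nat 4%nat p.
Proof.
  intros HX HY.
  assert (Hwedge : forall a b, sum5 (fun i => sum5 (fun j => X i p * Y j p * wedge (th a) (th b) i j p))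
            = pairing (th a) X p * pairing (th b) Y p - pairing (th b) X p * pairing (th a) Y p)
    by (intros; unfold pairing, wedge, sum5; ring).
  assert (Hfold : forall l,
    sum5 (fun i => sum5 (fun j => X i p * Y j p * fold_right (fun ab acc =>
      c (fst ab) (snd ab) p * wedge (th (fst ab)) (th (snd ab)) i j p + acc) 0 l))
    = fold_right (fun ab acc => c (fst ab) (snd ab) p
        * (pairing (th (fst ab)) X p * pairing (th (snd ab)) Y p
           - pairing (th (snd ab)) X p * pairing (th (fst ab)) Y p) + acc) 0 l).
  { induction l as [|[a b] l IH]; cbn [fold_right fst snd].
    - unfold sum5. ring.
    - rewrite <- IH, <- Hwedge. unfold sum5. ring. }
  unfold expand2. rewrite Hfold. unfold pairs5. cbn [fold_right fst snd].
  rewrite !HX, !HY by lia. simpl. ring.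
Qed.

(* The complex coordinates (z1, z2, zbar1, zbar2, v), dual to the frame of [Dcoord]. *)
Definition zcoord (i : nat) : cfun := fun q =>
  match i with
  | 0%nat => RtoC (getc q 0) + Ci * RtoC (getc q 1)
  | 1%nat => RtoC (getc q 2) + Ci * RtoC (getc q 3)
  | 2%nat => RtoC (getc q 0) - Ci * RtoC (getc q 1)
  | 3%nat => RtoC (getc q 2) - Ci * RtoC (getc q 3)
  | _ => RtoC (getc q 4)
  end.

Definition linfun (a : nat -> C) : cfun := fun q => sum5 (fun i => a i * zcoord i q).

Section LinearFunctions.
Variable U : pt -> Prop.
Hypothesis U_open : open_pt U.

Lemma csmooth_zcoord i : csmooth U (zcoord i).
Proof.
  assert (Hc : forall k, (k < 5)%nat -> csmooth U (fun q => RtoC (getc q k)))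
    by (intros; apply csmooth_RtoC, smooth_coord; auto).
  destruct i as [|[|[|[|i]]]]; unfold zcoord;
    try (apply Hc; lia);
    (apply csmooth_minus || apply csmooth_plus); auto;
    try (apply Hc; lia); apply (csmooth_mult U U_open (fun _ => Ci)); auto using csmooth_const;
    apply Hc; lia.
Qed.

Lemma csmooth_linfun a : csmooth U (linfun a).
Proof.
  unfold linfun, sum5.
  repeat (apply csmooth_plus; auto);
    apply (csmooth_mult U U_open (fun _ => a _)); auto using csmooth_const, csmooth_zcoord.
Qed.

Lemma Dcoord_zcoord i j q : (i < 5)%nat -> (j < 5)%nat -> U q ->
  Dcoord j (zcoord i) q = if Nat.eqb i j then 1 else 0.
Proof.
  intros Hi Hj Hq.
  assert (Hc : forall k, (k < 5)%nat -> csmooth U (fun q => RtoC (getc q k)))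
    by (intros; apply csmooth_RtoC, smooth_coord; auto).
  assert (Hd : forall k m, (k < 5)%nat -> (m < 5)%nat ->
            cpartial m (fun q => RtoC (getc q k)) q = if Nat.eqb k m then 1 else 0).
  { intros k m Hk Hm. rewrite cpartial_RtoC, rpartial_coord by auto.
    now destruct (Nat.eqb k m). }
  rewrite Dcoord_cpartial by exact Hj.
  destruct i as [|[|[|[|[|i]]]]]; try lia; unfold zcoord, Cminus;
    rewrite ?(cpartial_plus U), ?cpartial_opp, ?(cpartial_scal U), !Hd
      by (repeat first [ assumption | apply xindex_lt | apply yindex_lt | lia | apply Hc; lia
                       | apply csmooth_opp | apply (csmooth_mult U U_open (fun _ => Ci))
                       | apply csmooth_const ]);
    destruct j as [|[|[|[|[|j]]]]]; try lia; simpl; apply injective_projections; simpl; field.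
Qed.

Lemma Dcoord_linfun j a q : (j < 5)%nat -> U q -> Dcoord j (linfun a) q = a j.
Proof.
  intros Hj Hq. unfold linfun, sum5.
  rewrite !(Dcoord_plus U), !(Dcoord_mult U), !Dcoord_const, !Dcoord_zcoord
    by (repeat first [ assumption | lia | apply csmooth_zcoord | apply csmooth_plus
                     | apply (csmooth_mult U U_open (fun _ => a _)) | apply csmooth_const ]).
  destruct j as [|[|[|[|[|j]]]]]; try lia; simpl; ring.
Qed.

Lemma vderiv_linfun X a q : U q -> vderiv X (linfun a) q = sum5 (fun i => X i q * a i).
Proof.
  intros Hq. unfold vderiv. apply sum5_ext. intros j Hj. now rewrite Dcoord_linfun.
Qed.

End LinearFunctions.

Definition vconj (X : vfield) : vfield := fun i q => Cconj (X (conj_index i) q).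

Lemma Cconj_vderiv X g p : Cconj (vderiv X g p) = vderiv (vconj X) (cconj g) p.
Proof.
  unfold vderiv, vconj, sum5. rewrite !Cplus_conj, !Cmult_conj, !Dcoord_conj by lia.
  simpl. ring.
Qed.

Lemma Cconj_vderiv_of X Y g p : (forall i, (i < 5)%nat -> Cconj (X (conj_index i) p) = Y i p) ->
  Cconj (vderiv X g p) = vderiv Y (cconj g) p.
Proof.
  intros H. rewrite Cconj_vderiv. unfold vderiv. apply sum5_ext. intros i Hi.
  unfold vconj. now rewrite H.
Qed.

Create HintDb csmooth.

Ltac csmooth_step :=
  first
  [ assumption
  | solve [auto with csmooth]
  | match goal with
    | |- csmooth _ (vderiv _ _) => apply csmooth_vderiv
    | |- csmooth _ (fun q => vderiv _ _ q) => apply csmooth_vderiv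
    | |- csmooth _ (cconj _) => apply csmooth_conj
    | |- csmooth _ (fun q => Cminus (@?f q) (@?g q)) => apply csmooth_minus
    | |- csmooth _ (fun q => Cplus (@?f q) (@?g q)) => apply csmooth_plus
    | |- csmooth _ (fun q => Cdiv (@?f q) (@?g q)) => apply csmooth_div
    | |- csmooth _ (fun q => Cmult (@?f q) (@?g q)) => apply csmooth_mult
    | |- csmooth _ (fun q => Cinv (@?f q)) => apply csmooth_inv
    | |- csmooth _ (fun q => Copp (@?f q)) => apply csmooth_opp
    | |- csmooth _ (fun q => Cconj (@?f q)) => apply csmooth_conj
    end ].

Ltac solve_csmooth := repeat csmooth_step.

(** * The frame of the CR structure *)

Section CRStructure.
Variables (U : pt -> Prop) (F : pt -> R).
Hypotheses (U_open : open_pt U) (F_smooth : smooth_on U F)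
  (ell_nz : forall p, U p -> ell F p <> 0)
  (levi_rank1 : forall p, U p -> levi_rank_one F p)
  (Lb1k_nz : forall p, U p -> Lb1k F p <> 0).

Lemma csmooth_Fc : csmooth U (Fc F).
Proof. apply csmooth_RtoC, smooth_on_smooth; assumption. Qed.

Lemma Acoef_denom_nz p : 1 + Ci * Dv (Fc F) p <> 0.
Proof.
  unfold Dv, Fc. rewrite cpartial_RtoC. intros E. apply (f_equal fst) in E. simpl in E. lra.
Qed.

Lemma csmooth_Acoef j : csmooth U (Acoef F j).
Proof.
  assert (HD : forall i, (i < 5)%nat -> csmooth U (Dcoord i (Fc F)))
    by (intros; apply csmooth_Dcoord; auto using csmooth_Fc).
  unfold Acoef. apply csmooth_div; auto using Acoef_denom_nz.
  - apply (csmooth_mult U U_open (fun _ => - Ci)); auto using csmooth_const.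
    destruct j as [|[|j]]; [apply (HD 1%nat) | apply (HD 0%nat) | apply (HD 1%nat)]; lia.
  - apply csmooth_plus; auto using csmooth_const.
    apply (csmooth_mult U U_open (fun _ => Ci)); auto using csmooth_const.
    apply (HD 4%nat). lia.
Qed.

Lemma csmooth_Abcoef j : csmooth U (Abcoef F j).
Proof. apply csmooth_conj; auto using csmooth_Acoef. Qed.

Lemma csmooth_Dz_Fc j : csmooth U (Dz j (Fc F)).
Proof.
  destruct j as [|[|j]]; [apply (csmooth_Dcoord U U_open 1) | apply (csmooth_Dcoord U U_open 0)
                          | apply (csmooth_Dcoord U U_open 1)]; auto using csmooth_Fc; lia.
Qed.

Lemma csmooth_Dv_Fc : csmooth U (Dv (Fc F)).
Proof. apply (csmooth_Dcoord U U_open 4); auto using csmooth_Fc; lia. Qed.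

Local Hint Resolve csmooth_const csmooth_Fc csmooth_Acoef csmooth_Abcoef csmooth_Dz_Fc
  csmooth_Dv_Fc : csmooth.

Definition vL1 : vfield := fun i =>
  match i with 0%nat => fun _ => 1 | 4%nat => Acoef F 1 | _ => fun _ => 0 end.
Definition vL2 : vfield := fun i =>
  match i with 1%nat => fun _ => 1 | 4%nat => Acoef F 2 | _ => fun _ => 0 end.
Definition vLb1 : vfield := fun i =>
  match i with 2%nat => fun _ => 1 | 4%nat => Abcoef F 1 | _ => fun _ => 0 end.
Definition vLb2 : vfield := fun i =>
  match i with 3%nat => fun _ => 1 | 4%nat => Abcoef F 2 | _ => fun _ => 0 end.
Definition vT : vfield := fun i => match i with 4%nat => fun _ => 1 | _ => fun _ => 0 end.
Definition vK : vfield := fun i =>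
  match i with
  | 0%nat => kk F | 1%nat => fun _ => 1
  | 4%nat => fun q => kk F q * Acoef F 1 q + Acoef F 2 q | _ => fun _ => 0
  end.
Definition vKb : vfield := fun i =>
  match i with
  | 2%nat => kkb F | 3%nat => fun _ => 1
  | 4%nat => fun q => kkb F q * Abcoef F 1 q + Abcoef F 2 q | _ => fun _ => 0
  end.

Lemma Lop_1_vderiv g : Lop F 1 g = vderiv vL1 g.
Proof. apply functional_extensionality. intros q. unfold Lop, vderiv, vL1, sum5. simpl. ring. Qed.
Lemma Lop_2_vderiv g : Lop F 2 g = vderiv vL2 g.
Proof. apply functional_extensionality. intros q. unfold Lop, vderiv, vL2, sum5. simpl. ring. Qed.
Lemma Lbop_1_vderiv g : Lbop F 1 g = vderiv vLb1 g.
Proof. apply functional_extensionality. intros q. unfold Lbop, vderiv, vLb1, sum5. simpl. ring. Qed.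
Lemma Lbop_2_vderiv g : Lbop F 2 g = vderiv vLb2 g.
Proof. apply functional_extensionality. intros q. unfold Lbop, vderiv, vLb2, sum5. simpl. ring. Qed.

Lemma vderiv_vK h p : vderiv vK h p = kk F p * vderiv vL1 h p + vderiv vL2 h p.
Proof. unfold vderiv, vK, vL1, vL2, sum5. ring. Qed.
Lemma vderiv_vKb h p : vderiv vKb h p = kkb F p * vderiv vLb1 h p + vderiv vLb2 h p.
Proof. unfold vderiv, vKb, vLb1, vLb2, sum5. ring. Qed.

(* Equivalent to [[L1, L2] = 0]; it holds because second derivatives of [F] commute. *)
Lemma L1_A2_eq_L2_A1 p : U p -> vderiv vL1 (Acoef F 2) p = vderiv vL2 (Acoef F 1) p.
Proof.
  intros Hp. unfold Acoef.
  rewrite !(vderiv_div U U_open), !(vderiv_scal U U_open), !(vderiv_plus U), !vderiv_const,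
    !(vderiv_scal U U_open) by (auto using Acoef_denom_nz; solve_csmooth).
  unfold vderiv, vL1, vL2, sum5, Acoef.
  change (Dz 1 (Fc F)) with (Dcoord 0 (Fc F)).
  change (Dz 2 (Fc F)) with (Dcoord 1 (Fc F)).
  change (Dv (Fc F)) with (Dcoord 4 (Fc F)).
  rewrite (Dcoord_comm U U_open 0 1), (Dcoord_comm U U_open 4 1), (Dcoord_comm U U_open 4 0);
    auto using csmooth_Fc; try lia.
  pose proof (Acoef_denom_nz p) as Hn. change (Dv (Fc F)) with (Dcoord 4 (Fc F)) in Hn.
  field. exact Hn.
Qed.

Ltac conj_fields := intros [|[|[|[|[|i]]]]] Hi; try lia; cbn;
  rewrite ?Cconj_conj; apply injective_projections; simpl; ring.

Lemma Cconj_vderiv_L1 g p : Cconj (vderiv vL1 g p) = vderiv vLb1 (cconj g) p.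
Proof. apply Cconj_vderiv_of. conj_fields. Qed.
Lemma Cconj_vderiv_L2 g p : Cconj (vderiv vL2 g p) = vderiv vLb2 (cconj g) p.
Proof. apply Cconj_vderiv_of. conj_fields. Qed.
Lemma Cconj_vderiv_Lb1 g p : Cconj (vderiv vLb1 g p) = vderiv vL1 (cconj g) p.
Proof. apply Cconj_vderiv_of. conj_fields. Qed.
Lemma Cconj_vderiv_Lb2 g p : Cconj (vderiv vLb2 g p) = vderiv vL2 (cconj g) p.
Proof. apply Cconj_vderiv_of. conj_fields. Qed.
Lemma Cconj_vderiv_T g p : Cconj (vderiv vT g p) = vderiv vT (cconj g) p.
Proof. apply Cconj_vderiv_of. conj_fields. Qed.

Definition vL (i : nat) : vfield := match i with 1%nat => vL1 | _ => vL2 end.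
Definition vLb (i : nat) : vfield := match i with 1%nat => vLb1 | _ => vLb2 end.

Lemma levi_vderiv i j p : (i = 1 \/ i = 2)%nat -> (j = 1 \/ j = 2)%nat ->
  levi F i j p = vderiv (vL i) (Abcoef F j) p - vderiv (vLb j) (Acoef F i) p.
Proof.
  intros [-> | ->] [-> | ->]; unfold levi;
    rewrite ?Lop_1_vderiv, ?Lop_2_vderiv, ?Lbop_1_vderiv, ?Lbop_2_vderiv; reflexivity.
Qed.

Lemma Cconj_levi i j p : (i = 1 \/ i = 2)%nat -> (j = 1 \/ j = 2)%nat ->
  Cconj (levi F i j p) = - levi F j i p.
Proof.
  intros Hi Hj. rewrite !levi_vderiv, Cminus_conj by auto.
  destruct Hi as [-> | ->], Hj as [-> | ->]; cbn [vL vLb];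
    rewrite ?Cconj_vderiv_L1, ?Cconj_vderiv_L2, ?Cconj_vderiv_Lb1, ?Cconj_vderiv_Lb2;
    unfold Abcoef; rewrite cconj_cconj; ring.
Qed.

Lemma ell_levi p : ell F p = Ci * levi F 1 1 p.
Proof. reflexivity. Qed.

Lemma levi11_nz p : U p -> levi F 1 1 p <> 0.
Proof. intros Hp E. apply (ell_nz p Hp). rewrite ell_levi, E. ring. Qed.

Lemma Cconj_ell p : Cconj (ell F p) = ell F p.
Proof. rewrite ell_levi, Cmult_conj, Cconj_levi, Cconj_Ci by auto. ring. Qed.

Lemma kk_levi p : kk F p = - levi F 2 1 p / levi F 1 1 p.
Proof. reflexivity. Qed.

Lemma kkb_levi p : U p -> kkb F p = - levi F 1 2 p / levi F 1 1 p.
Proof.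
  intros Hp. pose proof (levi11_nz p Hp).
  unfold kkb, cconj. rewrite kk_levi, Cdiv_conj, Copp_conj, !Cconj_levi by auto. field. auto.
Qed.

Lemma kk_levi_eq p : U p -> kk F p * levi F 1 1 p + levi F 2 1 p = 0.
Proof. intros Hp. rewrite kk_levi. field. auto using levi11_nz. Qed.

Lemma kkb_levi_eq p : U p -> kkb F p * levi F 1 1 p + levi F 1 2 p = 0.
Proof. intros Hp. rewrite kkb_levi by auto. field. auto using levi11_nz. Qed.

(* This is where the Levi form having rank exactly 1 enters. *)
Lemma levi_rank1_eq p : U p ->
  kk F p * kkb F p * levi F 1 1 p + kk F p * levi F 1 2 p + kkb F p * levi F 2 1 p
  + levi F 2 2 p = 0.
Proof.
  intros Hp. destruct (levi_rank1 p Hp) as [Hdet _]. pose proof (levi11_nz p Hp).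
  rewrite kk_levi, kkb_levi by auto.
  transitivity ((levi F 1 1 p * levi F 2 2 p - levi F 1 2 p * levi F 2 1 p) / levi F 1 1 p).
  - field. auto.
  - rewrite Hdet. field. auto.
Qed.

Ltac vsmooth_fields := intros [|[|[|[|[|i]]]]] Hi; try lia; cbn; solve_csmooth.

Lemma vsmooth_vL1 : vsmooth U vL1. Proof. vsmooth_fields. Qed.
Lemma vsmooth_vL2 : vsmooth U vL2. Proof. vsmooth_fields. Qed.
Lemma vsmooth_vLb1 : vsmooth U vLb1. Proof. vsmooth_fields. Qed.
Lemma vsmooth_vLb2 : vsmooth U vLb2. Proof. vsmooth_fields. Qed.
Lemma vsmooth_vT : vsmooth U vT. Proof. vsmooth_fields. Qed.
Local Hint Resolve vsmooth_vL1 vsmooth_vL2 vsmooth_vLb1 vsmooth_vLb2 vsmooth_vT : csmooth.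

Lemma csmooth_levi i j : (i = 1 \/ i = 2)%nat -> (j = 1 \/ j = 2)%nat -> csmooth U (levi F i j).
Proof.
  intros Hi Hj. apply (csmooth_ext U U_open (fun p => vderiv (vL i) (Abcoef F j) p
                                                     - vderiv (vLb j) (Acoef F i) p)).
  - intros. symmetry. apply levi_vderiv; auto.
  - destruct Hi as [-> | ->], Hj as [-> | ->]; cbn [vL vLb]; solve_csmooth.
Qed.

Lemma csmooth_kk : csmooth U (kk F).
Proof.
  apply (csmooth_ext U U_open (fun p => - levi F 2 1 p / levi F 1 1 p)); [intros; reflexivity|].
  apply csmooth_div; auto using levi11_nz.
  - apply csmooth_opp; auto. apply csmooth_levi; auto.
  - apply csmooth_levi; auto.
Qed.

Lemma csmooth_kkb : csmooth U (kkb F).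
Proof. apply csmooth_conj; auto using csmooth_kk. Qed.
Local Hint Resolve csmooth_kk csmooth_kkb : csmooth.

Lemma vsmooth_vK : vsmooth U vK. Proof. vsmooth_fields. Qed.
Lemma vsmooth_vKb : vsmooth U vKb. Proof. vsmooth_fields. Qed.
Local Hint Resolve vsmooth_vK vsmooth_vKb : csmooth.

Lemma Lb1_Ab2_eq_Lb2_Ab1 p : U p -> vderiv vLb1 (Abcoef F 2) p = vderiv vLb2 (Abcoef F 1) p.
Proof. intros Hp. unfold Abcoef. now rewrite <- Cconj_vderiv_L1, <- Cconj_vderiv_L2, L1_A2_eq_L2_A1. Qed.

Lemma vderiv_Kcoef X p : U p -> vderiv X (fun q => kk F q * Acoef F 1 q + Acoef F 2 q) p
  = vderiv X (kk F) p * Acoef F 1 p + kk F p * vderiv X (Acoef F 1) p + vderiv X (Acoef F 2) p.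
Proof. intros Hp. rewrite (vderiv_plus U), (vderiv_mult U) by solve_csmooth. reflexivity. Qed.

Lemma vderiv_Kbcoef X p : U p -> vderiv X (fun q => kkb F q * Abcoef F 1 q + Abcoef F 2 q) p
  = vderiv X (kkb F) p * Abcoef F 1 p + kkb F p * vderiv X (Abcoef F 1) p + vderiv X (Abcoef F 2) p.
Proof. intros Hp. rewrite (vderiv_plus U), (vderiv_mult U) by solve_csmooth. reflexivity. Qed.

Definition Lb1kb : cfun := vderiv vLb1 (kkb F).
Definition L1kb : cfun := vderiv vL1 (kkb F).
Definition Kkb : cfun := vderiv vK (kkb F).
Definition Kbk : cfun := vderiv vKb (kk F).
Definition TAb1 : cfun := vderiv vT (Abcoef F 1).
(* The [T]-component of [[T, Kbar]]. *)
Definition sigma : cfun := fun q => kkb F q * TAb1 q + vderiv vT (Abcoef F 2) q.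

Lemma Lb1k_vderiv p : Lb1k F p = vderiv vLb1 (kk F) p.
Proof. unfold Lb1k. now rewrite Lbop_1_vderiv. Qed.

Lemma csmooth_Lb1k : csmooth U (Lb1k F).
Proof.
  apply (csmooth_ext U U_open (vderiv vLb1 (kk F))); [intros; symmetry; apply Lb1k_vderiv|].
  solve_csmooth.
Qed.

Lemma csmooth_Lb1kb : csmooth U Lb1kb. Proof. unfold Lb1kb. solve_csmooth. Qed.
Lemma csmooth_L1kb : csmooth U L1kb. Proof. unfold L1kb. solve_csmooth. Qed.
Lemma csmooth_Kkb : csmooth U Kkb. Proof. unfold Kkb. solve_csmooth. Qed.
Lemma csmooth_Kbk : csmooth U Kbk. Proof. unfold Kbk. solve_csmooth. Qed.
Lemma csmooth_TAb1 : csmooth U TAb1. Proof. unfold TAb1. solve_csmooth. Qed.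
Lemma csmooth_sigma : csmooth U sigma. Proof. unfold sigma, TAb1. solve_csmooth. Qed.
Local Hint Resolve csmooth_Lb1k csmooth_Lb1kb csmooth_L1kb csmooth_Kkb csmooth_Kbk csmooth_TAb1
  csmooth_sigma : csmooth.

Ltac bracket_components :=
  intros [|[|[|[|[|i]]]]] Hi; try lia; unfold vbracket; cbn [vL1 vL2 vLb1 vLb2 vT vK vKb];
  rewrite ?vderiv_const, ?vderiv_Kcoef, ?vderiv_Kbcoef by auto; rewrite ?vderiv_vK, ?vderiv_vKb.

Lemma vcomm_T_Kb g q : U q -> csmooth U g ->
  vcomm vT vKb g q = vderiv vT (kkb F) q * vderiv vLb1 g q + sigma q * vderiv vT g q.
Proof.
  intros Hq Hg. rewrite (vcomm_vbracket U U_open) by solve_csmooth. apply vderiv_comb.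
  bracket_components; unfold sigma, TAb1; ring.
Qed.

Lemma vcomm_L1_Kb g q : U q -> csmooth U g -> vcomm vL1 vKb g q = L1kb q * vderiv vLb1 g q.
Proof.
  intros Hq Hg. rewrite (vcomm_vbracket U U_open) by solve_csmooth. apply vderiv_scal_field.
  unfold L1kb. bracket_components; try ring.
  apply (Ceq_of_diff _ _ (kkb F q * levi F 1 1 q + levi F 1 2 q)); [|auto using kkb_levi_eq].
  rewrite !levi_vderiv by auto. cbn [vL vLb]. ring.
Qed.

Lemma vcomm_K_Kb g q : U q -> csmooth U g ->
  vcomm vK vKb g q = Kkb q * vderiv vLb1 g q - Kbk q * vderiv vL1 g q.
Proof.
  intros Hq Hg. rewrite (vcomm_vbracket U U_open) by solve_csmooth.
  rewrite (vderiv_comb _ vLb1 vL1 (Kkb q) (- Kbk q)); [ring|].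
  unfold Kkb, Kbk. bracket_components; try ring.
  apply (Ceq_of_diff _ _ (kk F q * kkb F q * levi F 1 1 q + kk F q * levi F 1 2 q
                          + kkb F q * levi F 2 1 q + levi F 2 2 q)); [|auto using levi_rank1_eq].
  rewrite !levi_vderiv by auto. cbn [vL vLb]. ring.
Qed.

Lemma vcomm_Lb1_Kb g q : U q -> csmooth U g -> vcomm vLb1 vKb g q = Lb1kb q * vderiv vLb1 g q.
Proof.
  intros Hq Hg. rewrite (vcomm_vbracket U U_open) by solve_csmooth. apply vderiv_scal_field.
  unfold Lb1kb. bracket_components; try ring.
  apply (Ceq_of_diff _ _ (vderiv vLb1 (Abcoef F 2) q - vderiv vLb2 (Abcoef F 1) q)); [ring|].
  rewrite Lb1_Ab2_eq_Lb2_Ab1 by auto. ring.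
Qed.

Lemma vcomm_L1_Lb1 g q : U q -> csmooth U g -> vcomm vL1 vLb1 g q = levi F 1 1 q * vderiv vT g q.
Proof.
  intros Hq Hg. rewrite (vcomm_vbracket U U_open) by solve_csmooth. apply vderiv_scal_field.
  rewrite levi_vderiv by auto. cbn [vL vLb]. bracket_components; ring.
Qed.

Lemma vcomm_K_Lb1 g q : U q -> csmooth U g -> vcomm vK vLb1 g q = - Lb1k F q * vderiv vL1 g q.
Proof.
  intros Hq Hg. rewrite (vcomm_vbracket U U_open) by solve_csmooth. apply vderiv_scal_field.
  rewrite Lb1k_vderiv. bracket_components; try ring.
  apply (Ceq_of_diff _ _ (kk F q * levi F 1 1 q + levi F 2 1 q)); [|auto using kk_levi_eq].
  rewrite !levi_vderiv by auto. cbn [vL vLb]. ring.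
Qed.

Lemma vcomm_Lb1_T g q : U q -> csmooth U g -> vcomm vLb1 vT g q = - TAb1 q * vderiv vT g q.
Proof.
  intros Hq Hg. rewrite (vcomm_vbracket U U_open) by solve_csmooth. apply vderiv_scal_field.
  unfold TAb1. bracket_components; ring.
Qed.

(* A function whose differential at [p0] kills [L1] and [Lbar1] and takes the value 1 on [T];
   feeding it to an operator identity at [p0] isolates the [T]-component. *)
Definition tfun (p0 : pt) : cfun :=
  linfun (fun i => match i with
                   | 0%nat => - Acoef F 1 p0 | 2%nat => - Abcoef F 1 p0 | 4%nat => 1 | _ => 0
                   end).

Lemma csmooth_tfun p0 : csmooth U (tfun p0).
Proof. apply csmooth_linfun; auto. Qed.
Local Hint Resolve csmooth_tfun : csmooth.

Lemma tfun_L1 p : U p -> vderiv vL1 (tfun p) p = 0.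
Proof. intros Hp. unfold tfun. rewrite (vderiv_linfun U U_open) by auto. unfold vL1, sum5. ring. Qed.
Lemma tfun_Lb1 p : U p -> vderiv vLb1 (tfun p) p = 0.
Proof. intros Hp. unfold tfun. rewrite (vderiv_linfun U U_open) by auto. unfold vLb1, sum5. ring. Qed.
Lemma tfun_T p : U p -> vderiv vT (tfun p) p = 1.
Proof. intros Hp. unfold tfun. rewrite (vderiv_linfun U U_open) by auto. unfold vT, sum5. ring. Qed.

(* The Jacobi identity for (K, Kbar, Lbar1), tested on [tfun p] at [p]: only [Kbk * levi11]
   survives. *)
Lemma Kbk_zero p : U p -> Kbk p = 0.
Proof.
  intros Hp. set (g := tfun p).
  assert (E1 : forall h q, U q -> csmooth U h -> vcomm vKb vLb1 h q = - Lb1kb q * vderiv vLb1 h q)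
    by (intros; rewrite vcomm_antisym, vcomm_Lb1_Kb by auto; ring).
  assert (E2 : forall h q, U q -> csmooth U h -> vcomm vLb1 vK h q = Lb1k F q * vderiv vL1 h q)
    by (intros; rewrite vcomm_antisym, vcomm_K_Lb1 by auto; ring).
  assert (E3 : forall h q, U q -> csmooth U h ->
                 vcomm vK vKb h q = Kkb q * vderiv vLb1 h q + - Kbk q * vderiv vL1 h q)
    by (intros; rewrite vcomm_K_Kb by auto; ring).
  pose proof (vcomm_jacobi U U_open vK vKb vLb1 g p Hp vsmooth_vK vsmooth_vKb vsmooth_vLb1
    (csmooth_tfun p)) as J.
  rewrite (vderiv_vcomm_scaled U U_open vK vKb vLb1 vLb1 (fun q => - Lb1kb q)),
    (vderiv_vcomm_scaled U U_open vKb vLb1 vK vL1 (Lb1k F)),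
    (vderiv_vcomm_scaled2 U U_open vLb1 vK vKb vLb1 vL1 Kkb (fun q => - Kbk q)) in J
    by (auto; unfold g; solve_csmooth).
  rewrite vcomm_K_Lb1, (vcomm_antisym vKb vL1), vcomm_L1_Kb, vcomm_self,
    (vcomm_antisym vLb1 vL1), vcomm_L1_Lb1 in J by (auto; unfold g; solve_csmooth).
  unfold g in J. rewrite tfun_L1, tfun_Lb1, tfun_T in J by auto.
  apply (Cmult_eq_0_l _ (levi F 1 1 p)); auto using levi11_nz.
  rewrite <- J. ring.
Qed.

Lemma Kb_levi11 p : U p -> vderiv vKb (levi F 1 1) p = (sigma p - Lb1kb p) * levi F 1 1 p.
Proof.
  intros Hp. set (g := tfun p).
  assert (E : forall h q, U q -> csmooth U h -> vcomm vKb vL1 h q = - L1kb q * vderiv vLb1 h q)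
    by (intros; rewrite vcomm_antisym, vcomm_L1_Kb by auto; ring).
  pose proof (vcomm_jacobi U U_open vKb vL1 vLb1 g p Hp vsmooth_vKb vsmooth_vL1 vsmooth_vLb1
    (csmooth_tfun p)) as J.
  rewrite (vderiv_vcomm_scaled U U_open vKb vL1 vLb1 vT (levi F 1 1)),
    (vderiv_vcomm_scaled U U_open vL1 vLb1 vKb vLb1 Lb1kb),
    (vderiv_vcomm_scaled U U_open vLb1 vKb vL1 vLb1 (fun q => - L1kb q)) in J
    by (auto using vcomm_L1_Lb1, vcomm_Lb1_Kb, csmooth_levi; unfold g; solve_csmooth).
  rewrite (vcomm_antisym vKb vT), vcomm_T_Kb, vcomm_L1_Lb1, vcomm_self in J
    by (auto; unfold g; solve_csmooth).
  unfold g in J. rewrite tfun_Lb1, tfun_T in J by auto.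
  eapply Ceq_of_diff; [|exact J]. ring.
Qed.

Lemma Kb_TAb1 p : U p -> vderiv vKb TAb1 p = vderiv vLb1 sigma p - Lb1kb p * TAb1 p.
Proof.
  intros Hp. set (g := tfun p).
  assert (E1 : forall h q, U q -> csmooth U h -> vcomm vKb vLb1 h q = - Lb1kb q * vderiv vLb1 h q)
    by (intros; rewrite vcomm_antisym, vcomm_Lb1_Kb by auto; ring).
  assert (E2 : forall h q, U q -> csmooth U h -> vcomm vLb1 vT h q = - TAb1 q * vderiv vT h q)
    by (intros; apply vcomm_Lb1_T; auto).
  pose proof (vcomm_jacobi U U_open vKb vLb1 vT g p Hp vsmooth_vKb vsmooth_vLb1 vsmooth_vT
    (csmooth_tfun p)) as J.
  rewrite (vderiv_vcomm_scaled U U_open vKb vLb1 vT vT (fun q => - TAb1 q)),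
    (vderiv_vcomm_scaled2 U U_open vLb1 vT vKb vLb1 vT (vderiv vT (kkb F)) sigma),
    (vderiv_vcomm_scaled U U_open vT vKb vLb1 vLb1 (fun q => - Lb1kb q)) in J
    by (auto using vcomm_T_Kb; unfold g; solve_csmooth).
  rewrite (vcomm_antisym vKb vT), vcomm_T_Kb, vcomm_self, vcomm_Lb1_T,
    (vcomm_antisym vT vLb1), vcomm_Lb1_T in J by (auto; unfold g; solve_csmooth).
  rewrite (vderiv_opp U U_open) in J by solve_csmooth.
  unfold g in J. rewrite tfun_Lb1, tfun_T in J by auto.
  symmetry. eapply Ceq_of_diff; [|exact J]. ring.
Qed.

Lemma vderiv_Kb_Lb1 g p : U p -> csmooth U g ->
  vderiv vKb (vderiv vLb1 g) p = vderiv vLb1 (vderiv vKb g) p - Lb1kb p * vderiv vLb1 g p.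
Proof. intros Hp Hg. rewrite <- vcomm_Lb1_Kb by auto. unfold vcomm. ring. Qed.

Lemma Kb_Lb1k p : U p -> vderiv vKb (Lb1k F) p = - Lb1kb p * Lb1k F p.
Proof.
  intros Hp.
  rewrite (vderiv_ext_open U U_open vKb _ (vderiv vLb1 (kk F))), vderiv_Kb_Lb1, Lb1k_vderiv
    by (intros; auto using Lb1k_vderiv; solve_csmooth).
  rewrite (vderiv_ext_open U U_open vLb1 _ (fun _ => 0)), vderiv_const by (auto using Kbk_zero).
  ring.
Qed.

Lemma Kb_Lb1_Lb1k p : U p -> vderiv vKb (vderiv vLb1 (Lb1k F)) p
  = - vderiv vLb1 Lb1kb p * Lb1k F p - 2 * Lb1kb p * vderiv vLb1 (Lb1k F) p.
Proof.
  intros Hp. rewrite vderiv_Kb_Lb1 by (auto; solve_csmooth).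
  rewrite (vderiv_ext_open U U_open vLb1 _ (fun q => - Lb1kb q * Lb1k F q)), (vderiv_mult U),
    (vderiv_opp U U_open) by (auto using Kb_Lb1k; solve_csmooth).
  ring.
Qed.

Lemma Kb_Lb1_Lb1_Lb1k p : U p -> vderiv vKb (vderiv vLb1 (vderiv vLb1 (Lb1k F))) p
  = - vderiv vLb1 (vderiv vLb1 Lb1kb) p * Lb1k F p
    - 3 * vderiv vLb1 Lb1kb p * vderiv vLb1 (Lb1k F) p
    - 3 * Lb1kb p * vderiv vLb1 (vderiv vLb1 (Lb1k F)) p.
Proof.
  intros Hp. rewrite vderiv_Kb_Lb1 by (auto; solve_csmooth).
  rewrite (vderiv_ext_open U U_open vLb1 _ (fun q => - vderiv vLb1 Lb1kb q * Lb1k F q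
                                                     - 2 * Lb1kb q * vderiv vLb1 (Lb1k F) q)),
    (vderiv_minus U U_open), !(vderiv_mult U), (vderiv_opp U U_open), vderiv_const
    by (auto using Kb_Lb1_Lb1k; solve_csmooth).
  ring.
Qed.

Lemma csmooth_ell : csmooth U (ell F).
Proof.
  apply (csmooth_ext U U_open (fun q => Ci * levi F 1 1 q)); [reflexivity|].
  apply csmooth_mult; auto using csmooth_const, csmooth_levi.
Qed.
Local Hint Resolve csmooth_ell : csmooth.

Lemma Kb_ell p : U p -> vderiv vKb (ell F) p = (sigma p - Lb1kb p) * ell F p.
Proof.
  intros Hp.
  rewrite (vderiv_ext_open U U_open vKb _ (fun q => Ci * levi F 1 1 q)), (vderiv_scal U U_open),
    Kb_levi11 by (auto using csmooth_levi).
  rewrite ell_levi. ring.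
Qed.

Lemma Pbf_eq q : Pbf F q = (vderiv vLb1 (ell F) q - ell F q * TAb1 q) / ell F q.
Proof.
  unfold Pbf, cconj, Pf.
  replace (Dz 1 (ell F) q + Acoef F 1 q * Dv (ell F) q - ell F q * Dv (Acoef F 1) q)
    with (vderiv vL1 (ell F) q - ell F q * vderiv vT (Acoef F 1) q)
    by (unfold vderiv, vL1, vT, sum5; simpl; ring).
  assert (Hell : cconj (ell F) = ell F)
    by (apply functional_extensionality; intros; apply Cconj_ell).
  rewrite Cconj_div, Cminus_conj, Cmult_conj, Cconj_vderiv_L1, Cconj_vderiv_T, Cconj_ell, Hell.
  reflexivity.
Qed.

Lemma csmooth_Pbf : csmooth U (Pbf F).
Proof.
  apply (csmooth_ext U U_open (fun q => (vderiv vLb1 (ell F) q - ell F q * TAb1 q) / ell F q)).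
  - intros. symmetry. apply Pbf_eq.
  - apply csmooth_div; auto; solve_csmooth.
Qed.
Local Hint Resolve csmooth_Pbf : csmooth.

Lemma Kb_Pbf p : U p -> vderiv vKb (Pbf F) p = - vderiv vLb1 Lb1kb p - Lb1kb p * Pbf F p.
Proof.
  intros Hp. pose proof (ell_nz p Hp).
  rewrite (vderiv_ext_open U U_open vKb _ (fun q => vderiv vLb1 (ell F) q / ell F q - TAb1 q)),
    (vderiv_minus U U_open), (vderiv_div U U_open), vderiv_Kb_Lb1, Kb_TAb1, Kb_ell
    by (auto; try (intros; rewrite Pbf_eq; field; auto); solve_csmooth).
  rewrite (vderiv_ext_open U U_open vLb1 _ (fun q => (sigma q - Lb1kb q) * ell F q)),
    (vderiv_mult U), (vderiv_minus U U_open) by (auto using Kb_ell; solve_csmooth).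
  rewrite Pbf_eq. field. auto.
Qed.

Lemma Kb_Lb1_Pbf p : U p -> vderiv vKb (vderiv vLb1 (Pbf F)) p
  = - vderiv vLb1 (vderiv vLb1 Lb1kb) p - vderiv vLb1 Lb1kb p * Pbf F p
    - 2 * Lb1kb p * vderiv vLb1 (Pbf F) p.
Proof.
  intros Hp. rewrite vderiv_Kb_Lb1 by (auto; solve_csmooth).
  rewrite (vderiv_ext_open U U_open vLb1 _ (fun q => - vderiv vLb1 Lb1kb q - Lb1kb q * Pbf F q)),
    (vderiv_minus U U_open), (vderiv_opp U U_open), (vderiv_mult U)
    by (auto using Kb_Pbf; solve_csmooth).
  ring.
Qed.

Lemma Kb_inv_Lb1k p : U p -> vderiv vKb (fun q => / Lb1k F q) p = Lb1kb p * / Lb1k F p.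
Proof.
  intros Hp. pose proof (Lb1k_nz p Hp).
  rewrite (vderiv_inv U U_open), Kb_Lb1k by auto with csmooth. field. auto.
Qed.

Definition H0_expanded : cfun := fun q =>
    - (1/6) * (vderiv vLb1 (vderiv vLb1 (Lb1k F)) q * / Lb1k F q)
    + (2/9) * (vderiv vLb1 (Lb1k F) q * vderiv vLb1 (Lb1k F) q * (/ Lb1k F q * / Lb1k F q))
    + (1/18) * (vderiv vLb1 (Lb1k F) q * Pbf F q * / Lb1k F q)
    + (1/6) * vderiv vLb1 (Pbf F) q - (1/9) * (Pbf F q * Pbf F q).

Lemma H0_eq q : U q -> H0 F q = H0_expanded q.
Proof.
  intros Hq. pose proof (Lb1k_nz q Hq).
  unfold H0, H0_expanded. rewrite !Lbop_1_vderiv. simpl. field. auto.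
Qed.

Lemma Kb_H0 p : U p -> vderiv vKb (H0 F) p = - 2 * Lb1kb p * H0 F p.
Proof.
  intros Hp. pose proof (Lb1k_nz p Hp).
  rewrite (vderiv_ext_open U U_open vKb _ H0_expanded), H0_eq by (auto using H0_eq).
  unfold H0_expanded.
  repeat (first [ rewrite (vderiv_minus U U_open) | rewrite (vderiv_plus U)
                | rewrite (vderiv_mult U) ]; try solve [auto; solve_csmooth]).
  rewrite !vderiv_const, Kb_inv_Lb1k, Kb_Lb1_Lb1k, Kb_Lb1_Lb1_Lb1k, Kb_Lb1_Pbf, Kb_Pbf by auto.
  field. auto.
Qed.

Lemma csmooth_H0 : csmooth U (H0 F).
Proof.
  apply (csmooth_ext U U_open H0_expanded); [intros; symmetry; apply H0_eq; auto|].
  unfold H0_expanded. solve_csmooth.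
Qed.

Lemma csmooth_B0 : csmooth U (B0 F).
Proof.
  apply (csmooth_ext U U_open (fun q => vderiv vLb1 (Lb1k F) q / Lb1k F q - Pbf F q)).
  - intros. unfold B0. now rewrite Lbop_1_vderiv.
  - solve_csmooth.
Qed.

Lemma Cconj_Lb1k q : Cconj (Lb1k F q) = L1kb q.
Proof. now rewrite Lb1k_vderiv, Cconj_vderiv_Lb1. Qed.

Lemma L1kb_nz q : U q -> L1kb q <> 0.
Proof.
  intros Hq E. apply (Lb1k_nz q Hq).
  rewrite <- (Cconj_conj (Lb1k F q)), Cconj_Lb1k, E. apply injective_projections; simpl; ring.
Qed.
Local Hint Resolve csmooth_H0 csmooth_B0 L1kb_nz : csmooth.

(** * The dual frame *)

(* The frame dual to [coframe F] has [vE0] as its first and [vE4] as its last vector. *)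
Definition vE0 : vfield := fun i q =>
  ell F q * vT i q - Ci / 3 * B0 F q * vL1 i q - Ci * H0 F q / Lb1k F q * vK i q
  + Ci / 3 * Cconj (B0 F q) * vLb1 i q + Ci * Cconj (H0 F q) / L1kb q * vKb i q.
Definition vE4 : vfield := vscale (fun q => / L1kb q) vKb.

Lemma vsmooth_vE0 : vsmooth U vE0.
Proof.
  intros i Hi. unfold vE0. solve_csmooth.
Qed.

Lemma vsmooth_vE4 : vsmooth U vE4.
Proof. intros i Hi. unfold vE4, vscale. solve_csmooth. Qed.

Lemma coframe_dual_frame a q : (a < 5)%nat -> U q ->
  pairing (coframe F a) vE0 q = (if Nat.eqb a 0 then 1 else 0)
  /\ pairing (coframe F a) vE4 q = (if Nat.eqb a 4 then 1 else 0).
Proof.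
  intros Ha Hq.
  pose proof (ell_nz q Hq). pose proof (Lb1k_nz q Hq). pose proof (L1kb_nz q Hq).
  pose proof RtoC_3_nz.
  rewrite <- Cconj_Lb1k in *.
  destruct a as [|[|[|[|[|a]]]]]; try lia; split;
    unfold pairing, sum5, coframe, conj_form, kappa0', zeta0'', rho0, vE0, vE4, vscale,
      vT, vL1, vK, vLb1, vKb, kkb, Abcoef, cconj; cbv beta iota; cbn [Nat.eqb];
    rewrite <- ?Cconj_Lb1k;
    repeat progress rewrite ?Cplus_conj, ?Cminus_conj, ?Cmult_conj, ?Copp_conj, ?Cconj_div,
      ?Cconj_inv, ?Cconj_conj, ?Cconj_RtoC, ?Cconj_ell, ?Cconj_Ci;
    field; auto.
Qed.

Lemma vderiv_vE0 h q : vderiv vE0 h q =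
  ell F q * vderiv vT h q - Ci / 3 * B0 F q * vderiv vL1 h q - Ci * H0 F q / Lb1k F q * vderiv vK h q
  + Ci / 3 * Cconj (B0 F q) * vderiv vLb1 h q + Ci * Cconj (H0 F q) / L1kb q * vderiv vKb h q.
Proof. unfold vderiv, vE0, sum5. ring. Qed.

Lemma vcomm_E0_Kb g p : U p -> csmooth U g -> vcomm vE0 vKb g p =
  ell F p * vcomm vT vKb g p - Ci / 3 * B0 F p * vcomm vL1 vKb g p
  - Ci * H0 F p / Lb1k F p * vcomm vK vKb g p + Ci / 3 * Cconj (B0 F p) * vcomm vLb1 vKb g p
  + Ci * Cconj (H0 F p) / L1kb p * vcomm vKb vKb g p
  - (vderiv vKb (ell F) p * vderiv vT g p - vderiv vKb (fun q => Ci / 3 * B0 F q) p * vderiv vL1 g p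
     - vderiv vKb (fun q => Ci * H0 F q / Lb1k F q) p * vderiv vK g p
     + vderiv vKb (fun q => Ci / 3 * Cconj (B0 F q)) p * vderiv vLb1 g p
     + vderiv vKb (fun q => Ci * Cconj (H0 F q) / L1kb q) p * vderiv vKb g p).
Proof.
  intros Hp Hg. unfold vcomm at 1. rewrite vderiv_vE0.
  rewrite (vderiv_ext_open U U_open vKb (vderiv vE0 g) (fun q =>
    ell F q * vderiv vT g q - Ci / 3 * B0 F q * vderiv vL1 g q - Ci * H0 F q / Lb1k F q * vderiv vK g q
    + Ci / 3 * Cconj (B0 F q) * vderiv vLb1 g q + Ci * Cconj (H0 F q) / L1kb q * vderiv vKb g q))
    by (auto using vderiv_vE0).
  repeat first [ rewrite (vderiv_plus U) by (auto; solve_csmooth)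
               | rewrite (vderiv_minus U U_open) by (auto; solve_csmooth) ].
  rewrite !(vderiv_mult U) by (auto; solve_csmooth).
  unfold vcomm. ring.
Qed.

Lemma Kb_H0_coef p : U p ->
  vderiv vKb (fun q => Ci * H0 F q / Lb1k F q) p = - Ci * Lb1kb p * H0 F p / Lb1k F p.
Proof.
  intros Hp. pose proof (Lb1k_nz p Hp) as Hm.
  rewrite (vderiv_div U U_open), (vderiv_scal U U_open), Kb_H0, Kb_Lb1k by (auto; solve_csmooth).
  field. auto.
Qed.

Lemma pairing_zeta_vbracket_E0_E4 p : U p -> pairing (zeta0'' F) (vbracket vE0 vE4) p = 0.
Proof.
  intros Hp. pose proof (ell_nz p Hp) as Hell. pose proof (Lb1k_nz p Hp) as Hm.
  (* [G] is a function whose differential at [p] is [zeta0''] at [p]. *)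
  set (G := linfun (fun j => zeta0'' F j p)).
  assert (HGs : csmooth U G) by (apply csmooth_linfun; auto).
  assert (HG : forall X, vderiv X G p = pairing (zeta0'' F) X p).
  { intros X. unfold G. rewrite (vderiv_linfun U U_open) by auto.
    apply sum5_ext. intros. ring. }
  rewrite <- HG, <- (vcomm_vbracket U U_open) by auto using vsmooth_vE0, vsmooth_vE4.
  unfold vE4. rewrite (vcomm_vscale U U_open), vcomm_E0_Kb by (auto; solve_csmooth).
  rewrite vcomm_T_Kb, vcomm_L1_Kb, vcomm_K_Kb, vcomm_Lb1_Kb, vcomm_self, Kb_ell, Kb_H0_coef
    by auto.
  rewrite !HG. unfold pairing, sum5, zeta0'', rho0, vT, vL1, vK, vLb1, vKb.
  field. auto using L1kb_nz.
Qed.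

Lemma csmooth_zeta0'' i : csmooth U (zeta0'' F i).
Proof.
  unfold zeta0'', rho0. destruct i as [|[|[|[|i]]]]; solve_csmooth.
Qed.

End CRStructure.

Theorem lemma9p1 (U : pt -> Prop) (F : pt -> R) :
  open_pt U ->
  analytic_on U F ->
  smooth_on U F ->
  (forall p, U p -> ell F p <> 0%C) ->
  (forall p, U p -> levi_rank_one F p) ->
  (forall p, U p -> Lb1k F p <> 0%C) ->
  forall c : nat -> nat -> cfun,
    (forall p, U p -> forall i j, (i < 5)%nat -> (j < 5)%nat ->
       dform (zeta0'' F) i j p = expand2 (coframe F) c i j p) ->
    forall p, U p -> c 0%nat 4%nat p = 0%C.
Proof.
  intros U_open _ F_smooth ell_nz levi_rank1 Lb1k_nz c Hc p Hp.
  pose proof (coframe_dual_frame U F ell_nz Lb1k_nz) as Hdual.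
  rewrite <- (expand2_on_dual_pair (coframe F) c (vE0 F) (vE4 F) p)
    by (intros; apply Hdual; auto).
  transitivity (sum5 (fun i => sum5 (fun j => vE0 F i p * vE4 F j p * dform (zeta0'' F) i j p))).
  { apply sum5_ext. intros i Hi. apply sum5_ext. intros j Hj. now rewrite Hc. }
  rewrite (dform_on_pair U U_open) by eauto using csmooth_zeta0'', vsmooth_vE0, vsmooth_vE4.
  assert (HE0 : forall q, U q -> pairing (zeta0'' F) (vE0 F) q = 0)
    by (intros q Hq; apply (Hdual 2%nat q); auto).
  assert (HE4 : forall q, U q -> pairing (zeta0'' F) (vE4 F) q = 0)
    by (intros q Hq; apply (Hdual 2%nat q); auto).
  rewrite (vderiv_ext_open U U_open _ _ (fun _ => 0) p Hp HE0),
    (vderiv_ext_open U U_open _ _ (fun _ => 0) p Hp HE4), !vderiv_const,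
    (pairing_zeta_vbracket_E0_E4 U F) by auto.
  ring.
Qed.
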